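(* Let $X$ be a Banach space, $\Omega\in L(X)$ an isomorphism of $X$ onto itself, $\tau>0$ and $f\in C^{0}([0,\infty),X)$. Then the unique classical solution of $$\ddot x(t)-\Omega^{2}x(t-2\tau)=f(t)\ (t\ge0),\qquad x(t)=0\ (t\in[-2\tau,0])$$ is given by $x(t)=\int_{0}^{t}x_2(t-s;\Omega)f(s)\,ds$ for $t\ge0$ (and $x(t)=0$ for $t\in[-2\tau,0]$).
   Context: For $A\in L(X)$, $\exp_\tau(t;A)=0$ for $t<-\tau$, $=\mathrm{id}_X$ for $-\tau\le t<0$, and $=\sum_{j=0}^{k}A^{j}\frac{(t-(j-1)\tau)^{j}}{j!}$ for $(k-1)\tau\le t<k\tau$, $k\in\mathbb N$. For $t\in\mathbb R$, $x_2(t;\Omega):=\tfrac12\Omega^{-1}(\exp_\tau(t;\Omega)-\exp_\tau(t;-\Omega))$; in particular $x_2(t;\Omega)=0$ for $t<0$. A classical solution is a function $x\in C^{1}([-2\tau,\infty),X)\cap C^{2}([-2\tau,0],X)\cap C^{2}([0,\infty),X)$ (one-sided derivatives at endpoints) satisfying the equations pointwise. *)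

From Stdlib Require Import Reals Lra Lia ZArith.
Open Scope R_scope.

Record Banach := {
  B :> Type;
  bzero : B;
  badd : B -> B -> B;
  bopp : B -> B;
  bscal : R -> B -> B;
  bnorm : B -> R;
  badd_assoc : forall x y z, badd x (badd y z) = badd (badd x y) z;
  badd_comm : forall x y, badd x y = badd y x;
  badd_0 : forall x, badd x bzero = x;
  badd_opp : forall x, badd x (bopp x) = bzero;
  bscal_assoc : forall a b x, bscal a (bscal b x) = bscal (a * b) x;
  bscal_1 : forall x, bscal 1 x = x;
  bscal_distr_l : forall a x y, bscal a (badd x y) = badd (bscal a x) (bscal a y);
  bscal_distr_r : forall a b x, bscal (a + b) x = badd (bscal a x) (bscal b x);
  bnorm_eq0 : forall x, bnorm x = 0 -> x = bzero;
  bnorm_scal : forall a x, bnorm (bscal a x) = Rabs a * bnorm x;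
  bnorm_triangle : forall x y, bnorm (badd x y) <= bnorm x + bnorm y;
  bcomplete : forall u : nat -> B,
    (forall eps, eps > 0 -> exists N, forall m n, (m >= N)%nat -> (n >= N)%nat ->
        bnorm (badd (u m) (bopp (u n))) < eps) ->
    exists l, forall eps, eps > 0 -> exists N, forall n, (n >= N)%nat ->
        bnorm (badd (u n) (bopp l)) < eps
}.

Arguments bzero {_}. Arguments badd {_}. Arguments bopp {_}.
Arguments bscal {_}. Arguments bnorm {_}.

Definition bsub {X : Banach} (x y : X) : X := badd x (bopp y).

Fixpoint bsum {X : Banach} (n : nat) (g : nat -> X) : X :=
  match n with
  | O => bzero
  | S m => badd (bsum m g) (g m)
  end.

Definition blinear {X : Banach} (A : X -> X) : Prop :=
  (forall x y, A (badd x y) = badd (A x) (A y)) /\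
  (forall a x, A (bscal a x) = bscal a (A x)).
Definition bbounded {X : Banach} (A : X -> X) : Prop :=
  exists C, forall x, bnorm (A x) <= C * bnorm x.

Fixpoint opow {X : Banach} (A : X -> X) (j : nat) : X -> X :=
  match j with
  | O => fun x => x
  | S i => fun x => A (opow A i x)
  end.

Definition lim_in {X : Banach} (g : R -> X) (D : R -> Prop) (t0 : R) (l : X) : Prop :=
  forall eps, eps > 0 -> exists delta, delta > 0 /\
    forall s, D s -> s <> t0 -> Rabs (s - t0) < delta -> bnorm (bsub (g s) l) < eps.

Definition cont_on {X : Banach} (g : R -> X) (D : R -> Prop) : Prop :=
  forall t, D t -> lim_in g D t (g t).

Definition deriv_on {X : Banach} (g : R -> X) (D : R -> Prop) (g' : R -> X) : Prop :=
  forall t, D t -> lim_in (fun s => bscal (/ (s - t)) (bsub (g s) (g t))) D t (g' t).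

Definition is_RInt {X : Banach} (g : R -> X) (a b : R) (I : X) : Prop :=
  forall eps, eps > 0 -> exists delta, delta > 0 /\
    forall (n : nat) (p xi : nat -> R),
      p O = a -> p n = b ->
      (forall k, (k < n)%nat -> p k <= xi k <= p (S k) /\ p (S k) - p k < delta) ->
      bnorm (bsub (bsum n (fun k => bscal (p (S k) - p k) (g (xi k)))) I) < eps.

(** exp_tau(t; A) applied to a vector x. For (k-1)tau <= t < k tau, k = floor(t/tau)+1. *)
Definition exp_tau {X : Banach} (tau : R) (A : X -> X) (t : R) (x : X) : X :=
  if Rlt_dec t (- tau) then bzero
  else if Rlt_dec t 0 then x
  else let k := Z.to_nat (Int_part (t / tau) + 1) in
       bsum (S k) (fun j => bscal ((t - (INR j - 1) * tau) ^ j / INR (fact j)) (opow A j x)).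

Definition x2 {X : Banach} (tau : R) (Om Ominv : X -> X) (t : R) (y : X) : X :=
  bscal (1 / 2) (Ominv (bsub (exp_tau tau Om t y) (exp_tau tau (fun z => bopp (Om z)) t y))).

(** Classical solution of  x''(t) - Om^2 x(t - 2 tau) = f(t) (t >= 0),
    x = 0 on [-2tau, 0]:  x in C^1([-2tau,oo)) /\ C^2([-2tau,0]) /\ C^2([0,oo)). *)
Definition classical_solution {X : Banach} (tau : R) (Om : X -> X) (f : R -> X)
    (x : R -> X) : Prop :=
  let I := fun t => - 2 * tau <= t in
  let Ineg := fun t => - 2 * tau <= t <= 0 in
  let Ipos := fun t => 0 <= t in
  exists x1 x2neg x2pos : R -> X,
    deriv_on x I x1 /\ cont_on x1 I /\
    deriv_on x1 Ineg x2neg /\ cont_on x2neg Ineg /\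
    deriv_on x1 Ipos x2pos /\ cont_on x2pos Ipos /\
    (forall t, 0 <= t -> bsub (x2pos t) (Om (Om (x (t - 2 * tau)))) = f t) /\
    (forall t, Ineg t -> x t = bzero).

(* On bounded intervals the kernel [x2 (u; Om)] is the finite sum
   [sum_m (u - 2 m tau)_+^(2m+1) / (2m+1)! Om^(2m)].

   Existence: if [Q_n] is the [n]-fold primitive of [f] extended by zero below [0], then
   [x(t) = sum_m Om^(2m) Q_(2m+1) (t - 2 m tau)] is a finite sum on bounded intervals, and
   differentiating it twice turns each term into [Om^2] times the previous one delayed by [2 tau].

   Representation: for a solution [y] and fixed [t], put [b_m (u) = (u - 2 m tau)_+^(2m+1) / (2m+1)!]
   and [Phi (s) = sum_m Om^(2m) (b_m (t - s) y'(s) + b_m' (t - s) y(s))]. Since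
   [b_m'' = b_(m-1) (. - 2 tau)], the product rule and the equation give
   [Phi' (s) = x2 (t - s) f(s) + q (s - 2 tau) - q (s)] for an explicit delay term [q].
   Now [Phi (0) = 0], [Phi (t) = y (t)], and the integral of the delay terms vanishes because [q]
   is zero near both ends of [[0, t]]; integrating [Phi'] over [[0, t]] gives the formula, which
   in particular determines the solution. *)

From Stdlib Require Import Reals.
From Stdlib Require Import Lra Lia ZArith Classical ClassicalEpsilon.
Open Scope R_scope.

Arguments badd_assoc {_}. Arguments badd_comm {_}. Arguments badd_0 {_}.
Arguments badd_opp {_}. Arguments bscal_assoc {_}. Arguments bscal_1 {_}.
Arguments bscal_distr_l {_}. Arguments bscal_distr_r {_}. Arguments bnorm_eq0 {_}.
Arguments bnorm_scal {_}. Arguments bnorm_triangle {_}. Arguments bcomplete {_}.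

(** * Linear algebra in a Banach space *)

Lemma badd_0l {X : Banach} (x : X) : badd bzero x = x.
Proof. rewrite badd_comm; apply badd_0. Qed.

Lemma badd_cancel_l {X : Banach} (x y z : X) : badd x y = badd x z -> y = z.
Proof.
  intros H.
  assert (badd (bopp x) (badd x y) = badd (bopp x) (badd x z)) by now rewrite H.
  rewrite !badd_assoc, (badd_comm (bopp x) x), badd_opp, !badd_0l in H0. exact H0.
Qed.

Lemma bscal_0 {X : Banach} (x : X) : bscal 0 x = bzero.
Proof.
  apply (badd_cancel_l (bscal 0 x)). rewrite badd_0, <- bscal_distr_r.
  now rewrite Rplus_0_r.
Qed.

Lemma bscal_zero {X : Banach} (a : R) : bscal a (@bzero X) = bzero.
Proof.
  rewrite <- (bscal_0 bzero), bscal_assoc. now rewrite Rmult_0_r.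
Qed.

Lemma bopp_eq_scal {X : Banach} (x : X) : bopp x = bscal (-1) x.
Proof.
  apply (badd_cancel_l x). rewrite badd_opp.
  assert (E : badd (bscal 1 x) (bscal (-1) x) = bzero).
  { rewrite <- bscal_distr_r. replace (1 + -1) with 0 by ring. now rewrite bscal_0. }
  rewrite bscal_1 in E. auto.
Qed.

Lemma bopp_opp {X : Banach} (x : X) : bopp (bopp x) = x.
Proof. rewrite !bopp_eq_scal, bscal_assoc. replace (-1 * -1) with 1 by ring. apply bscal_1. Qed.

Lemma bopp_add {X : Banach} (x y : X) : bopp (badd x y) = badd (bopp x) (bopp y).
Proof. rewrite !bopp_eq_scal. apply bscal_distr_l. Qed.

Lemma bopp_zero {X : Banach} : bopp (@bzero X) = bzero.
Proof. rewrite bopp_eq_scal. apply bscal_zero. Qed.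

Lemma bopp_bscal {X : Banach} a (x : X) : bopp (bscal a x) = bscal (-a) x.
Proof. rewrite bopp_eq_scal, bscal_assoc. f_equal; ring. Qed.

Lemma bscal_opp {X : Banach} a (x : X) : bscal a (bopp x) = bscal (-a) x.
Proof. rewrite bopp_eq_scal, bscal_assoc. f_equal; ring. Qed.

Lemma bnorm_zero {X : Banach} : bnorm (@bzero X) = 0.
Proof. rewrite <- (bscal_0 bzero), bnorm_scal, Rabs_R0. ring. Qed.

Lemma bnorm_opp {X : Banach} (x : X) : bnorm (bopp x) = bnorm x.
Proof. rewrite bopp_eq_scal, bnorm_scal. replace (Rabs (-1)) with 1. ring. rewrite Rabs_left; lra. Qed.

Lemma bnorm_nonneg {X : Banach} (x : X) : 0 <= bnorm x.
Proof.
  pose proof (bnorm_triangle x (bopp x)). rewrite badd_opp, bnorm_zero, bnorm_opp in H. lra.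
Qed.

Lemma bsub_diag {X : Banach} (x : X) : bsub x x = bzero.
Proof. apply badd_opp. Qed.

Lemma bsub_0r {X : Banach} (x : X) : bsub x bzero = x.
Proof. unfold bsub. rewrite bopp_zero. apply badd_0. Qed.

Lemma bnorm_sub_sym {X : Banach} (x y : X) : bnorm (bsub x y) = bnorm (bsub y x).
Proof.
  rewrite <- bnorm_opp. unfold bsub. rewrite bopp_add, bopp_opp, badd_comm. reflexivity.
Qed.

Lemma bsub_add_cancel {X : Banach} (x y : X) : badd (bsub x y) y = x.
Proof. unfold bsub. rewrite <- badd_assoc, (badd_comm (bopp y)), badd_opp. apply badd_0. Qed.

Lemma badd_sub_cancel {X : Banach} (x y : X) : bsub (badd x y) y = x.
Proof. unfold bsub. rewrite <- badd_assoc, badd_opp. apply badd_0. Qed.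

Lemma badd_swap {X : Banach} (a b c d : X) :
  badd (badd a b) (badd c d) = badd (badd a c) (badd b d).
Proof.
  rewrite !badd_assoc. f_equal.
  rewrite <- !badd_assoc. f_equal. apply badd_comm.
Qed.

Lemma bsub_add_add {X : Banach} (a b c d : X) :
  bsub (badd a b) (badd c d) = badd (bsub a c) (bsub b d).
Proof.
  unfold bsub. rewrite bopp_add. rewrite !badd_assoc. f_equal.
  rewrite <- !badd_assoc. f_equal. apply badd_comm.
Qed.

Lemma bsub_sub_sub {X : Banach} (a b c d : X) :
  bsub (bsub a b) (bsub c d) = bsub (bsub a c) (bsub b d).
Proof. unfold bsub. rewrite !bopp_add, bopp_opp. apply badd_swap. Qed.

Lemma bsub_triangle {X : Banach} (x y z : X) :
  bnorm (bsub x z) <= bnorm (bsub x y) + bnorm (bsub y z).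
Proof.
  replace (bsub x z) with (badd (bsub x y) (bsub y z)). apply bnorm_triangle.
  unfold bsub. rewrite <- badd_assoc, (badd_assoc (bopp y)), (badd_comm (bopp y) y), badd_opp, badd_0l.
  reflexivity.
Qed.

Lemma bscal_sub {X : Banach} a (x y : X) : bscal a (bsub x y) = bsub (bscal a x) (bscal a y).
Proof. unfold bsub. rewrite bscal_distr_l, bscal_opp, bopp_bscal. reflexivity. Qed.

Lemma bscal_sub_r {X : Banach} a b (x : X) : bscal (a - b) x = bsub (bscal a x) (bscal b x).
Proof. unfold bsub, Rminus. rewrite bscal_distr_r, bopp_bscal. reflexivity. Qed.

Lemma bnorm_eq0_sub {X : Banach} (x y : X) : bnorm (bsub x y) = 0 -> x = y.
Proof.
  intros H. apply bnorm_eq0 in H. rewrite <- (bsub_add_cancel x y), H. apply badd_0l.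
Qed.

Lemma eq_of_bnorm_sub_small {X : Banach} (x y : X) :
  (forall eps, eps > 0 -> bnorm (bsub x y) < eps) -> x = y.
Proof.
  intros H. apply bnorm_eq0_sub. pose proof (bnorm_nonneg (bsub x y)).
  destruct (Req_dec (bnorm (bsub x y)) 0); auto.
  specialize (H (bnorm (bsub x y))). lra.
Qed.

Lemma bnorm_le_of_le_add_eps {X : Banach} (x : X) c :
  (forall eps, eps > 0 -> bnorm x <= c + eps) -> bnorm x <= c.
Proof.
  intros H. destruct (Rle_dec (bnorm x) c); auto.
  specialize (H ((bnorm x - c)/2)). lra.
Qed.

Lemma blin_zero {X : Banach} (A : X -> X) : blinear A -> A bzero = bzero.
Proof. intros [H1 H2]. rewrite <- (bscal_0 bzero), H2. rewrite !bscal_0. reflexivity. Qed.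

Lemma blin_opp {X : Banach} (A : X -> X) x : blinear A -> A (bopp x) = bopp (A x).
Proof. intros [H1 H2]. rewrite !bopp_eq_scal. apply H2. Qed.

Lemma blin_sub {X : Banach} (A : X -> X) x y : blinear A -> A (bsub x y) = bsub (A x) (A y).
Proof. intros HA. unfold bsub. rewrite (proj1 HA), blin_opp; auto. Qed.

Lemma opow_linear {X : Banach} (A : X -> X) n : blinear A -> blinear (opow A n).
Proof.
  intros [Hadd Hscal]. induction n as [|n [IHadd IHscal]]; simpl; split; auto.
  - intros x y. rewrite IHadd. apply Hadd.
  - intros a x. rewrite IHscal. apply Hscal.
Qed.

Lemma bbounded_pos {X : Banach} (A : X -> X) :
  bbounded A -> exists C, C > 0 /\ forall x, bnorm (A x) <= C * bnorm x.
Proof.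
  intros [C HC]. exists (Rabs C + 1). split; [pose proof (Rabs_pos C); lra|].
  intros x. eapply Rle_trans; [apply HC|]. apply Rmult_le_compat_r; [apply bnorm_nonneg|].
  pose proof (Rle_abs C); lra.
Qed.

Lemma opow_bounded {X : Banach} (A : X -> X) n : bbounded A -> bbounded (opow A n).
Proof.
  intros HA. destruct (bbounded_pos A HA) as [C [HC HCb]].
  induction n as [|n [C' HC']]; simpl.
  - exists 1. intros; lra.
  - exists (C * C'). intros x. eapply Rle_trans; [apply HCb|].
    rewrite Rmult_assoc. apply Rmult_le_compat_l; [lra | apply HC'].
Qed.

Lemma opow_comm {X : Banach} (A : X -> X) n x : A (opow A n x) = opow A n (A x).
Proof. induction n; simpl; auto. now rewrite IHn. Qed.

Lemma opow_zero {X : Banach} (Om : X -> X) k : blinear Om -> opow Om k bzero = bzero.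
Proof. intros H. apply blin_zero, opow_linear, H. Qed.

Lemma opow_neg {X : Banach} (Om : X -> X) j v : blinear Om ->
  opow (fun z => bopp (Om z)) j v = bscal ((-1) ^ j) (opow Om j v).
Proof.
  intros HL. induction j; simpl. rewrite bscal_1; auto.
  rewrite IHj, (proj2 HL), bopp_bscal. f_equal. ring.
Qed.

Lemma blinear_inverse {X : Banach} (Om Ominv : X -> X) : blinear Om ->
  (forall y, Om (Ominv y) = y) -> (forall y, Ominv (Om y) = y) -> blinear Ominv.
Proof.
  intros HL H1 H2. split.
  intros x y. rewrite <- (H1 x) at 1. rewrite <- (H1 y) at 1. rewrite <- (proj1 HL), H2. auto.
  intros a x. rewrite <- (H1 x) at 1. rewrite <- (proj2 HL), H2. auto.
Qed.

Fixpoint rsum (n : nat) (c : nat -> R) : R :=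
  match n with O => 0 | S m => rsum m c + c m end.

Lemma bsum_ext {X : Banach} n (F G : nat -> X) :
  (forall k, (k < n)%nat -> F k = G k) -> bsum n F = bsum n G.
Proof. induction n; simpl; intros H; auto. rewrite IHn, H; auto. Qed.

Lemma bsum_add {X : Banach} n (F G : nat -> X) :
  bsum n (fun k => badd (F k) (G k)) = badd (bsum n F) (bsum n G).
Proof. induction n; simpl. now rewrite badd_0. rewrite IHn. apply badd_swap. Qed.

Lemma bsum_zero {X : Banach} n (F : nat -> X) :
  (forall k, (k < n)%nat -> F k = bzero) -> bsum n F = bzero.
Proof. induction n; simpl; intros H; auto. rewrite IHn, H; auto. apply badd_0. Qed.

Lemma bsum_lin {X : Banach} (A : X -> X) n (F : nat -> X) :
  blinear A -> A (bsum n F) = bsum n (fun k => A (F k)).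
Proof. intros HA. induction n; simpl. now apply blin_zero. rewrite (proj1 HA), IHn. auto. Qed.

Lemma bsum_scal {X : Banach} c n (F : nat -> X) :
  bscal c (bsum n F) = bsum n (fun k => bscal c (F k)).
Proof. induction n; simpl. apply bscal_zero. rewrite bscal_distr_l, IHn. auto. Qed.

Lemma bsum_opp {X : Banach} n (F : nat -> X) :
  bopp (bsum n F) = bsum n (fun k => bopp (F k)).
Proof. induction n; simpl. apply bopp_zero. rewrite bopp_add, IHn. auto. Qed.

Lemma bsum_sub {X : Banach} n (F G : nat -> X) :
  bsum n (fun k => bsub (F k) (G k)) = bsub (bsum n F) (bsum n G).
Proof. unfold bsub. rewrite bsum_add, bsum_opp. auto. Qed.

Lemma rsum_bscal {X : Banach} n (c : nat -> R) (x : X) :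
  bscal (rsum n c) x = bsum n (fun k => bscal (c k) x).
Proof. induction n; simpl. apply bscal_0. rewrite bscal_distr_r, IHn. auto. Qed.

Lemma bsum_exchange {X : Banach} n m (F : nat -> nat -> X) :
  bsum n (fun k => bsum m (fun j => F k j)) = bsum m (fun j => bsum n (fun k => F k j)).
Proof.
  induction n; simpl. symmetry. apply bsum_zero. auto.
  rewrite IHn, <- bsum_add. auto.
Qed.

Lemma bsum_split {X : Banach} n m (F : nat -> X) :
  bsum (n + m) F = badd (bsum n F) (bsum m (fun k => F (n + k)%nat)).
Proof.
  induction m; simpl. rewrite Nat.add_0_r, badd_0. auto.
  rewrite Nat.add_succ_r. simpl. rewrite IHm, badd_assoc. auto.
Qed.

Lemma bsum_recl {X : Banach} n (F : nat -> X) :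
  bsum (S n) F = badd (F O) (bsum n (fun k => F (S k))).
Proof.
  induction n. simpl. rewrite badd_0l, badd_0. auto.
  change (bsum (S (S n)) F) with (badd (bsum (S n) F) (F (S n))).
  rewrite IHn. simpl. rewrite badd_assoc. auto.
Qed.

Lemma bsum_norm {X : Banach} n (F : nat -> X) :
  bnorm (bsum n F) <= rsum n (fun k => bnorm (F k)).
Proof.
  induction n; simpl. rewrite bnorm_zero. lra.
  eapply Rle_trans. apply bnorm_triangle. lra.
Qed.

Lemma rsum_le n (a b : nat -> R) :
  (forall k, (k < n)%nat -> a k <= b k) -> rsum n a <= rsum n b.
Proof.
  induction n as [|n IHn]; simpl; intros H; [lra|].
  pose proof (H n (Nat.lt_succ_diag_r n)).
  pose proof (IHn (fun k Hk => H k (Nat.lt_lt_succ_r _ _ Hk))). lra.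
Qed.

Lemma rsum_scal n c (a : nat -> R) : rsum n (fun k => c * a k) = c * rsum n a.
Proof. induction n; simpl. ring. rewrite IHn. ring. Qed.

Lemma rsum_tele n (p : nat -> R) : rsum n (fun k => p (S k) - p k) = p n - p O.
Proof. induction n; simpl. ring. rewrite IHn. ring. Qed.

Lemma bsum_tele {X : Banach} n (G : nat -> X) :
  bsum n (fun k => bsub (G (S k)) (G k)) = bsub (G n) (G O).
Proof.
  induction n; simpl. symmetry. apply bsub_diag.
  rewrite IHn. unfold bsub. rewrite (badd_comm (G (S n))), badd_swap.
  rewrite badd_opp, badd_0l. apply badd_comm.
Qed.

Lemma bsum_widen_zero {X : Banach} N0 N (F : nat -> X) :
  (forall k, (N0 <= k)%nat -> F k = bzero) -> (N0 <= N)%nat -> bsum N F = bsum N0 F.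
Proof.
  intros H HN. induction HN; auto. simpl. rewrite IHHN, H; auto. apply badd_0.
Qed.

Lemma bsum_eq_of_tails_zero {X : Banach} N1 N2 (F : nat -> X) :
  (forall k, (N1 <= k)%nat -> F k = bzero) -> (forall k, (N2 <= k)%nat -> F k = bzero) ->
  bsum N1 F = bsum N2 F.
Proof.
  intros H1 H2. destruct (Nat.le_ge_cases N1 N2).
  symmetry. apply bsum_widen_zero with (N0:=N1); auto.
  apply bsum_widen_zero with (N0:=N2); auto.
Qed.

Lemma bsum_pairs {X : Banach} N (F : nat -> X) :
  bsum (2 * N) F = bsum N (fun m => badd (F (2 * m)%nat) (F (S (2 * m)))).
Proof.
  induction N. simpl. auto.
  replace (2 * S N)%nat with (S (S (2 * N))) by lia.
  change (bsum (S (S (2*N))) F) with (badd (badd (bsum (2*N) F) (F (2*N)%nat)) (F (S (2*N)))).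
  rewrite IHN. change (bsum (S N) ?G) with (badd (bsum N G) (G N)). cbv beta. rewrite badd_assoc. auto.
Qed.

Lemma bsub_chain {X : Banach} (a b c : X) : badd (bsub a b) (bsub b c) = bsub a c.
Proof.
  unfold bsub. rewrite <- badd_assoc, (badd_assoc (bopp b)), (badd_comm (bopp b) b), badd_opp, badd_0l.
  reflexivity.
Qed.

Lemma bsub_scal_decomp {X : Banach} r L (w l : X) :
  bsub (bscal r w) (bscal L l) = badd (bscal (r - L) w) (bscal L (bsub w l)).
Proof. rewrite bscal_sub_r, bscal_sub. symmetry. apply bsub_chain. Qed.

Lemma bsub_sub_common {X : Banach} (a b c : X) : bsub (bsub a c) (bsub b c) = bsub a b.
Proof. rewrite bsub_sub_sub, bsub_diag. apply bsub_0r. Qed.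

Lemma bsub_add_sub_regroup {X : Banach} (r1 r2 i w : X) :
  bsub (bsub (badd r1 r2) i) w = badd (bsub r1 i) (bsub r2 w).
Proof.
  unfold bsub. rewrite <- !badd_assoc. f_equal.
  rewrite (badd_comm r2), !badd_assoc. rewrite <- !badd_assoc. f_equal. apply badd_comm.
Qed.

Lemma bscal_product_cancel {X : Banach} a b c (u w z : X) :
  badd (badd (bscal (- a) u) (bscal b w)) (badd (bscal (- c) z) (bscal a u)) = bsub (bscal b w) (bscal c z).
Proof.
  rewrite (badd_comm (bscal (- c) z)), badd_swap. rewrite <- bscal_distr_r.
  replace (- a + a) with 0 by ring. rewrite bscal_0, badd_0l. unfold bsub. rewrite bopp_bscal. auto.
Qed.

Lemma badd_sub_sub_cancel {X : Banach} (F C B : X) : badd (bsub (badd F C) B) (bsub B C) = F.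
Proof. rewrite bsub_chain. apply badd_sub_cancel. Qed.

(** * Limits, continuity and derivatives *)

Definition rlim_in (r : R -> R) (D : R -> Prop) (t0 L : R) : Prop :=
  forall eps, eps > 0 -> exists delta, delta > 0 /\
    forall s, D s -> s <> t0 -> Rabs (s - t0) < delta -> Rabs (r s - L) < eps.

Lemma lim_in_local {X : Banach} (g h : R -> X) D D' t0 l r :
  r > 0 -> (forall s, D s -> s <> t0 -> Rabs (s - t0) < r -> D' s /\ g s = h s) ->
  lim_in h D' t0 l -> lim_in g D t0 l.
Proof.
  intros Hr Hgh Hl eps Heps. destruct (Hl eps Heps) as [d [Hd H]].
  exists (Rmin d r). split. apply Rmin_pos; lra.
  intros s Ds Hs Hst. pose proof (Rmin_l d r). pose proof (Rmin_r d r).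
  destruct (Hgh s Ds Hs) as [D's E]. lra. rewrite E. apply H; auto. lra.
Qed.

Lemma lim_in_ext {X : Banach} (g h : R -> X) D t0 l :
  (forall s, D s -> s <> t0 -> g s = h s) -> lim_in h D t0 l -> lim_in g D t0 l.
Proof. intros H. apply lim_in_local with (r := 1). lra. intros; split; auto. Qed.

Lemma lim_in_const {X : Banach} (c : X) D t0 : lim_in (fun _ => c) D t0 c.
Proof. intros eps Heps. exists 1. split. lra. intros. rewrite bsub_diag, bnorm_zero. lra. Qed.

Lemma lim_in_add {X : Banach} (g h : R -> X) D t0 l1 l2 :
  lim_in g D t0 l1 -> lim_in h D t0 l2 ->
  lim_in (fun s => badd (g s) (h s)) D t0 (badd l1 l2).
Proof.
  intros H1 H2 eps Heps.
  destruct (H1 (eps/2)) as [d1 [Hd1 K1]]. lra.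
  destruct (H2 (eps/2)) as [d2 [Hd2 K2]]. lra.
  exists (Rmin d1 d2). split. apply Rmin_pos; lra.
  intros s Ds Hs Hst. pose proof (Rmin_l d1 d2). pose proof (Rmin_r d1 d2).
  rewrite bsub_add_add. eapply Rle_lt_trans. apply bnorm_triangle.
  assert (bnorm (bsub (g s) l1) < eps/2) by (apply K1; auto; lra).
  assert (bnorm (bsub (h s) l2) < eps/2) by (apply K2; auto; lra). lra.
Qed.

Lemma lim_in_op {X : Banach} (A : X -> X) (g : R -> X) D t0 l :
  blinear A -> bbounded A -> lim_in g D t0 l -> lim_in (fun s => A (g s)) D t0 (A l).
Proof.
  intros HA HB H eps Heps. destruct (bbounded_pos A HB) as [C [HC HCb]].
  destruct (H (eps / C)) as [d [Hd K]]. apply Rdiv_lt_0_compat; lra.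
  exists d. split; auto. intros s Ds Hs Hst.
  rewrite <- blin_sub; auto. eapply Rle_lt_trans. apply HCb.
  pose proof (K s Ds Hs Hst).
  apply Rmult_lt_compat_l with (r := C) in H0; auto.
  replace (C * (eps / C)) with eps in H0 by (field; lra). auto.
Qed.

Lemma lim_in_scal {X : Banach} c (g : R -> X) D t0 l :
  lim_in g D t0 l -> lim_in (fun s => bscal c (g s)) D t0 (bscal c l).
Proof.
  intros H eps Heps. destruct (H (eps / (Rabs c + 1))) as [d [Hd K]].
  apply Rdiv_lt_0_compat; auto. pose proof (Rabs_pos c); lra.
  exists d. split; auto. intros s Ds Hs Hst.
  rewrite <- bscal_sub, bnorm_scal. pose proof (K s Ds Hs Hst).
  pose proof (Rabs_pos c). pose proof (bnorm_nonneg (bsub (g s) l)).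
  apply Rle_lt_trans with ((Rabs c + 1) * bnorm (bsub (g s) l)). nra.
  apply Rmult_lt_compat_l with (r := Rabs c + 1) in H0. 2: lra.
  replace ((Rabs c + 1) * (eps / (Rabs c + 1))) with eps in H0 by (field; lra). auto.
Qed.

Lemma lim_in_mul {X : Banach} (r : R -> R) (w : R -> X) D t0 L l :
  rlim_in r D t0 L -> lim_in w D t0 l ->
  lim_in (fun s => bscal (r s) (w s)) D t0 (bscal L l).
Proof.
  intros Hr Hw eps Heps.
  set (nl := bnorm l). assert (Hnl : 0 <= nl) by apply bnorm_nonneg.
  destruct (Hr (eps / (2 * (nl + 1)))) as [d1 [Hd1 K1]].
  apply Rdiv_lt_0_compat; lra.
  destruct (Hw (Rmin 1 (eps / (2 * (Rabs L + 1))))) as [d2 [Hd2 K2]].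
  apply Rmin_pos. lra. apply Rdiv_lt_0_compat. lra. pose proof (Rabs_pos L); lra.
  exists (Rmin d1 d2). split. apply Rmin_pos; lra.
  intros s Ds Hs Hst. pose proof (Rmin_l d1 d2). pose proof (Rmin_r d1 d2).
  assert (A1 : Rabs (r s - L) < eps / (2 * (nl + 1))) by (apply K1; auto; lra).
  assert (A2 : bnorm (bsub (w s) l) < Rmin 1 (eps / (2 * (Rabs L + 1)))) by (apply K2; auto; lra).
  pose proof (Rmin_l 1 (eps / (2 * (Rabs L + 1)))). pose proof (Rmin_r 1 (eps / (2 * (Rabs L + 1)))).
  rewrite bsub_scal_decomp. eapply Rle_lt_trans. apply bnorm_triangle.
  rewrite !bnorm_scal.
  assert (Hws : bnorm (w s) <= nl + 1).
  { replace (w s) with (badd (bsub (w s) l) l) by apply bsub_add_cancel.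
    eapply Rle_trans. apply bnorm_triangle. unfold nl. lra. }
  pose proof (Rabs_pos (r s - L)). pose proof (Rabs_pos L). pose proof (bnorm_nonneg (w s)).
  pose proof (bnorm_nonneg (bsub (w s) l)).
  assert (E1 : Rabs (r s - L) * bnorm (w s) <= eps / 2).
  { apply Rle_trans with (eps / (2 * (nl + 1)) * (nl + 1)). apply Rmult_le_compat; lra.
    right. field. lra. }
  assert (E2 : Rabs L * bnorm (bsub (w s) l) < eps / 2).
  { apply Rle_lt_trans with ((Rabs L + 1) * bnorm (bsub (w s) l)). nra.
    apply Rlt_le_trans with ((Rabs L + 1) * (eps / (2 * (Rabs L + 1)))).
    apply Rmult_lt_compat_l; lra. right. field. lra. }
  lra.
Qed.

Lemma lim_in_shift {X : Banach} (g : R -> X) D D' t0 c l :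
  lim_in g D (t0 - c) l -> (forall s, D' s -> D (s - c)) ->
  lim_in (fun s => g (s - c)) D' t0 l.
Proof.
  intros H HD eps Heps. destruct (H eps Heps) as [d [Hd K]]. exists d. split; auto.
  intros s Ds Hs Hst. apply K; auto. intro E; apply Hs; lra.
  replace (s - c - (t0 - c)) with (s - t0) by ring. auto.
Qed.

Lemma lim_in_bsum {X : Banach} N (F : nat -> R -> X) (L : nat -> X) D t0 :
  (forall m, (m < N)%nat -> lim_in (F m) D t0 (L m)) ->
  lim_in (fun s => bsum N (fun m => F m s)) D t0 (bsum N L).
Proof.
  induction N; simpl; intros H. apply lim_in_const.
  apply lim_in_add. apply IHN. intros; apply H; lia. apply H; lia.
Qed.

Lemma lim_in_sub {X : Banach} (g h : R -> X) D t0 l1 l2 :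
  lim_in g D t0 l1 -> lim_in h D t0 l2 ->
  lim_in (fun s => bsub (g s) (h s)) D t0 (bsub l1 l2).
Proof.
  intros H1 H2. unfold bsub. apply lim_in_add; auto.
  apply lim_in_ext with (h := fun s => bscal (-1) (h s)). intros; apply bopp_eq_scal.
  rewrite bopp_eq_scal. apply lim_in_scal; auto.
Qed.

Lemma rlim_of_continuity_pt (phi : R -> R) D t0 : continuity_pt phi t0 -> rlim_in phi D t0 (phi t0).
Proof.
  intros H eps Heps. destruct (H eps Heps) as [d [Hd K]]. exists d. split; auto.
  intros s Ds Hs Hst. apply (K s). split. split. exact I. now apply not_eq_sym. simpl. unfold R_dist. auto.
Qed.

Lemma rlim_of_derivable_pt_lim (phi : R -> R) D t0 l : derivable_pt_lim phi t0 l ->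
  rlim_in (fun s => (phi s - phi t0) / (s - t0)) D t0 l.
Proof.
  intros H eps Heps. destruct (H eps Heps) as [d K]. exists d. split. apply cond_pos.
  intros s Ds Hs Hst. specialize (K (s - t0)).
  replace (t0 + (s - t0)) with s in K by ring. apply K. lra. auto.
Qed.

Lemma rlim_local (r1 r2 : R -> R) D D' t0 L r :
  r > 0 -> (forall s, D s -> s <> t0 -> Rabs (s - t0) < r -> D' s /\ r1 s = r2 s) ->
  rlim_in r2 D' t0 L -> rlim_in r1 D t0 L.
Proof.
  intros Hr Hgh Hl eps Heps. destruct (Hl eps Heps) as [d [Hd H]].
  exists (Rmin d r). split. apply Rmin_pos; lra.
  intros s Ds Hs Hst. pose proof (Rmin_l d r). pose proof (Rmin_r d r).
  destruct (Hgh s Ds Hs) as [D's E]. lra. rewrite E. apply H; auto. lra.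
Qed.

Definition rderiv_on (phi phi' : R -> R) (D : R -> Prop) : Prop :=
  forall x, D x -> rlim_in (fun s => (phi s - phi x) / (s - x)) D x (phi' x).

Definition diff_quot {X : Banach} (G : R -> X) (t s : R) : X := bscal (/ (s - t)) (bsub (G s) (G t)).

Lemma bnorm_sub_diff_quot {X : Banach} (G : R -> X) t s :
  s <> t -> bnorm (bsub (G s) (G t)) = Rabs (s - t) * bnorm (diff_quot G t s).
Proof.
  intros Hs. unfold diff_quot. rewrite bnorm_scal, <- Rmult_assoc, <- Rabs_mult, Rinv_r.
  rewrite Rabs_R1. ring. lra.
Qed.

Lemma lim_in_of_diff_quot {X : Banach} (G : R -> X) D t l :
  lim_in (diff_quot G t) D t l -> lim_in G D t (G t).
Proof.
  intros H eps Heps. destruct (H 1) as [d [Hd K]]. lra.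
  set (c := bnorm l + 1). assert (Hc : c > 0) by (unfold c; pose proof (bnorm_nonneg l); lra).
  exists (Rmin d (eps / c)). split. apply Rmin_pos; auto. apply Rdiv_lt_0_compat; lra.
  intros s Ds Hs Hst. pose proof (Rmin_l d (eps/c)). pose proof (Rmin_r d (eps/c)).
  assert (K1 : bnorm (bsub (diff_quot G t s) l) < 1) by (apply K; auto; lra).
  assert (Hq : bnorm (diff_quot G t s) <= c).
  { replace (diff_quot G t s) with (badd (bsub (diff_quot G t s) l) l) by apply bsub_add_cancel.
    eapply Rle_trans. apply bnorm_triangle. unfold c; lra. }
  assert (E : bsub (G s) (G t) = bscal (s - t) (diff_quot G t s)).
  { unfold diff_quot. rewrite bscal_assoc. rewrite Rinv_r. now rewrite bscal_1. lra. }
  rewrite E, bnorm_scal. pose proof (Rabs_pos (s - t)). pose proof (bnorm_nonneg (diff_quot G t s)).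
  apply Rle_lt_trans with (Rabs (s - t) * c). apply Rmult_le_compat_l; lra.
  apply Rlt_le_trans with (eps / c * c). apply Rmult_lt_compat_r; lra. right; field; lra.
Qed.

Lemma deriv_on_cont {X : Banach} (G g : R -> X) D : deriv_on G D g -> cont_on G D.
Proof. intros H t Dt. eapply lim_in_of_diff_quot. apply H; auto. Qed.

Lemma deriv_on_subset {X : Banach} (G g : R -> X) D D' :
  deriv_on G D g -> (forall s, D' s -> D s) -> deriv_on G D' g.
Proof.
  intros H HD t Dt. apply lim_in_local with (h := diff_quot G t) (D' := D) (r := 1). lra.
  intros; split; auto. apply H; auto.
Qed.

Lemma cont_on_subset {X : Banach} (G : R -> X) D D' :
  cont_on G D -> (forall s, D' s -> D s) -> cont_on G D'.
Proof.
  intros H HD t Dt. apply lim_in_local with (h := G) (D' := D) (r := 1). lra.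
  intros; split; auto. apply H; auto.
Qed.

Lemma diff_quot_add {X : Banach} (G H : R -> X) t s :
  diff_quot (fun u => badd (G u) (H u)) t s = badd (diff_quot G t s) (diff_quot H t s).
Proof. unfold diff_quot. rewrite bsub_add_add, bscal_distr_l. auto. Qed.

Lemma diff_quot_sub {X : Banach} (G H : R -> X) t s :
  diff_quot (fun u => bsub (G u) (H u)) t s = bsub (diff_quot G t s) (diff_quot H t s).
Proof. unfold diff_quot. rewrite bsub_sub_sub, bscal_sub. auto. Qed.

Lemma deriv_add {X : Banach} (G H g h : R -> X) D :
  deriv_on G D g -> deriv_on H D h ->
  deriv_on (fun u => badd (G u) (H u)) D (fun u => badd (g u) (h u)).
Proof.
  intros HG HH t Dt. apply lim_in_ext with (h := fun s => badd (diff_quot G t s) (diff_quot H t s)).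
  intros s _ _; exact (diff_quot_add G H t s). apply lim_in_add; [apply HG|apply HH]; auto.
Qed.

Lemma deriv_sub {X : Banach} (G H g h : R -> X) D :
  deriv_on G D g -> deriv_on H D h ->
  deriv_on (fun u => bsub (G u) (H u)) D (fun u => bsub (g u) (h u)).
Proof.
  intros HG HH t Dt. apply lim_in_ext with (h := fun s => bsub (diff_quot G t s) (diff_quot H t s)).
  intros s _ _; exact (diff_quot_sub G H t s). apply lim_in_sub; [apply HG|apply HH]; auto.
Qed.

Lemma deriv_op {X : Banach} (A : X -> X) (G g : R -> X) D :
  blinear A -> bbounded A -> deriv_on G D g ->
  deriv_on (fun u => A (G u)) D (fun u => A (g u)).
Proof.
  intros HA HB HG t Dt. apply lim_in_ext with (h := fun s => A (diff_quot G t s)).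
  intros s _ _. unfold diff_quot. rewrite (proj2 HA), (blin_sub A); auto.
  apply lim_in_op; auto. apply HG; auto.
Qed.

Lemma deriv_shift {X : Banach} (G g : R -> X) D D' c :
  deriv_on G D g -> (forall s, D' s -> D (s - c)) ->
  deriv_on (fun u => G (u - c)) D' (fun u => g (u - c)).
Proof.
  intros HG HD t Dt. apply lim_in_ext with (h := fun s => diff_quot G (t - c) (s - c)).
  intros. unfold diff_quot. f_equal. f_equal. ring.
  apply lim_in_shift with (g := diff_quot G (t - c)) (D := D); auto. apply HG; auto.
Qed.

Lemma deriv_bsum {X : Banach} N (G g : nat -> R -> X) D :
  (forall m, (m < N)%nat -> deriv_on (G m) D (g m)) ->
  deriv_on (fun u => bsum N (fun m => G m u)) D (fun u => bsum N (fun m => g m u)).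
Proof.
  induction N; simpl; intros H.
  intros t Dt. apply lim_in_ext with (h := fun _ => bzero).
  intros. unfold diff_quot. rewrite bsub_diag, bscal_zero. auto. apply lim_in_const.
  apply deriv_add. apply IHN; intros; apply H; lia. apply H; lia.
Qed.

Lemma deriv_zero {X : Banach} (G : R -> X) D :
  (forall s, D s -> G s = bzero) -> deriv_on G D (fun _ => bzero).
Proof.
  intros H t Dt. apply lim_in_ext with (h := fun _ => bzero).
  intros. unfold diff_quot. rewrite H, H; auto. rewrite bsub_diag, bscal_zero. auto. apply lim_in_const.
Qed.

Lemma deriv_ext {X : Banach} (G H g h : R -> X) D :
  (forall s, D s -> G s = H s) -> (forall s, D s -> g s = h s) ->
  deriv_on H D h -> deriv_on G D g.
Proof.
  intros E1 E2 HH t Dt. rewrite E2; auto. apply lim_in_ext with (h := diff_quot H t).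
  intros. unfold diff_quot. rewrite !E1; auto. apply HH; auto.
Qed.

Lemma deriv_local {X : Banach} (G H g : R -> X) D D' t r :
  r > 0 -> D t -> D' t -> G t = H t ->
  (forall s, D s -> s <> t -> Rabs (s - t) < r -> D' s /\ G s = H s) ->
  lim_in (diff_quot H t) D' t (g t) -> lim_in (diff_quot G t) D t (g t).
Proof.
  intros Hr Dt D't Et Hl K. apply lim_in_local with (h := diff_quot H t) (D' := D') (r := r); auto.
  intros s Ds Hs Hst. destruct (Hl s Ds Hs Hst). split; auto. unfold diff_quot. rewrite H1, Et. auto.
Qed.

Lemma diff_quot_scal {X : Banach} (phi : R -> R) (v : R -> X) t s :
  s <> t ->
  diff_quot (fun u => bscal (phi u) (v u)) t s =
  badd (bscal ((phi s - phi t) / (s - t)) (v s)) (bscal (phi t) (diff_quot v t s)).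
Proof.
  intros Hs. unfold diff_quot. rewrite bsub_scal_decomp, bscal_distr_l, !bscal_assoc.
  f_equal; f_equal. unfold Rdiv. ring. ring.
Qed.

Lemma deriv_scal {X : Banach} (phi phi' : R -> R) (v v' : R -> X) D :
  rderiv_on phi phi' D -> deriv_on v D v' ->
  deriv_on (fun u => bscal (phi u) (v u)) D
           (fun u => badd (bscal (phi' u) (v u)) (bscal (phi u) (v' u))).
Proof.
  intros Hphi Hv t Dt.
  apply lim_in_ext with (h := fun s => badd (bscal ((phi s - phi t) / (s - t)) (v s)) (bscal (phi t) (diff_quot v t s))).
  intros s _ Hs; exact (diff_quot_scal phi v t s Hs).
  apply lim_in_add. apply lim_in_mul. apply Hphi; auto. eapply lim_in_of_diff_quot. apply Hv; auto.
  apply lim_in_scal. apply Hv; auto.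
Qed.

Lemma cont_add {X : Banach} (G H : R -> X) D :
  cont_on G D -> cont_on H D -> cont_on (fun u => badd (G u) (H u)) D.
Proof. intros HG HH t Dt. apply lim_in_add; auto. Qed.

Lemma cont_op {X : Banach} (A : X -> X) (G : R -> X) D :
  blinear A -> bbounded A -> cont_on G D -> cont_on (fun u => A (G u)) D.
Proof. intros HA HB HG t Dt. apply lim_in_op; auto. Qed.

Lemma cont_shift {X : Banach} (G : R -> X) D D' c :
  cont_on G D -> (forall s, D' s -> D (s - c)) -> cont_on (fun u => G (u - c)) D'.
Proof. intros HG HD t Dt. apply lim_in_shift with (D := D); auto. Qed.

Lemma cont_bsum {X : Banach} N (G : nat -> R -> X) D :
  (forall m, (m < N)%nat -> cont_on (G m) D) -> cont_on (fun u => bsum N (fun m => G m u)) D.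
Proof. intros H t Dt. apply lim_in_bsum. intros; apply H; auto. Qed.

Lemma cont_scal {X : Banach} (phi : R -> R) (v : R -> X) D :
  (forall t, D t -> rlim_in phi D t (phi t)) -> cont_on v D ->
  cont_on (fun u => bscal (phi u) (v u)) D.
Proof. intros Hp Hv t Dt. apply lim_in_mul; auto. Qed.

Lemma cont_const {X : Banach} (c : X) D : cont_on (fun _ => c) D.
Proof. intros t Dt. apply lim_in_const. Qed.

(** * Mean value inequality and uniform continuity *)

Lemma real_induction (P : R -> Prop) a b :
  a <= b -> P a ->
  (forall x, a <= x < b -> (forall y, a <= y <= x -> P y) ->
     exists d, d > 0 /\ forall y, x < y <= b -> y < x + d -> P y) ->
  (forall x, a < x <= b -> (forall y, a <= y < x -> P y) -> P x) ->
  forall x, a <= x <= b -> P x.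
Proof.
  intros Hab Pa Hstep Hclosed.
  set (E := fun r => a <= r <= b /\ forall y, a <= y <= r -> P y).
  assert (Ea : E a) by (split; [lra | intros y Hy; replace y with a by lra; exact Pa]).
  destruct (completeness E) as [s [Hub Hlub]].
  { exists b. intros r [Hr _]; lra. }
  { exists a. exact Ea. }
  assert (Has : a <= s) by (apply Hub; exact Ea).
  assert (Hsb : s <= b) by (apply Hlub; intros r [Hr _]; lra).
  assert (Pbelow : forall y, a <= y < s -> P y).
  { intros y Hy. apply NNPP. intros Py.
    assert (s <= y); [|lra].
    apply Hlub. intros r [_ Hr]. apply Rnot_lt_le. intros Hyr. apply Py, Hr. lra. }
  assert (Ps : forall y, a <= y <= s -> P y).
  { intros y Hy. destruct (Rlt_le_dec y s); [apply Pbelow; lra|].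
    replace y with s by lra. destruct (Req_dec s a) as [-> | Hsa]; [exact Pa|].
    apply Hclosed; [lra | exact Pbelow]. }
  assert (Hs : s = b).
  { destruct (Req_dec s b) as [|Hne]; [assumption|exfalso].
    destruct (Hstep s ltac:(lra) Ps) as [d [Hd Hnext]].
    set (r := Rmin (s + d / 2) b).
    assert (Hr : s < r <= b) by (unfold r; split; [apply Rmin_glb_lt | apply Rmin_r]; lra).
    assert (Hrd : r <= s + d / 2) by apply Rmin_l.
    assert (E r).
    { split; [lra|]. intros y Hy. destruct (Rle_lt_dec y s); [apply Ps; lra|].
      apply Hnext; lra. }
    pose proof (Hub r ltac:(assumption)). lra. }
  intros x Hx. apply Ps. lra.
Qed.

Lemma mean_value_ineq_eta {X : Banach} (H h : R -> X) D u v M eta :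
  u <= v -> eta > 0 -> (forall r, u <= r <= v -> D r) -> deriv_on H D h ->
  (forall r, u <= r <= v -> bnorm (h r) <= M) ->
  bnorm (bsub (H v) (H u)) <= (M + eta) * (v - u).
Proof.
  intros Huv Heta HD HH Hh.
  assert (HM : 0 <= M) by (eapply Rle_trans; [apply (bnorm_nonneg (h u)) | apply (Hh u); lra]).
  apply (real_induction (fun r => bnorm (bsub (H r) (H u)) <= (M + eta) * (r - u)) u v); [lra | | | | lra].
  - rewrite bsub_diag, bnorm_zero. lra.
  - intros x Hx Px. destruct (HH x (HD x ltac:(lra)) eta Heta) as [d [Hd K]].
    exists d. split; [exact Hd|]. intros y Hy Hyd.
    assert (Kq : bnorm (bsub (diff_quot H x y) (h x)) < eta)
      by (apply K; [apply HD; lra | lra | rewrite Rabs_right; lra]).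
    assert (Hq : bnorm (diff_quot H x y) <= M + eta).
    { rewrite <- (bsub_add_cancel (diff_quot H x y) (h x)).
      eapply Rle_trans; [apply bnorm_triangle|]. pose proof (Hh x ltac:(lra)). lra. }
    eapply Rle_trans; [apply (bsub_triangle _ (H x))|].
    rewrite bnorm_sub_diff_quot, Rabs_right by lra.
    pose proof (Px x ltac:(lra)). nra.
  - intros x Hx Pbelow. apply bnorm_le_of_le_add_eps. intros eps Heps.
    destruct (deriv_on_cont H h D HH x (HD x ltac:(lra)) eps Heps) as [d [Hd K]].
    set (r0 := Rmax u (x - d / 2)).
    assert (Hr0 : u <= r0 < x) by (unfold r0; split; [apply Rmax_l | apply Rmax_lub_lt]; lra).
    assert (Hr0d : x - d / 2 <= r0) by apply Rmax_r.
    assert (Kx : bnorm (bsub (H x) (H r0)) < eps).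
    { rewrite bnorm_sub_sym. apply K; [apply HD; lra | lra | rewrite Rabs_left; lra]. }
    eapply Rle_trans; [apply (bsub_triangle _ (H r0))|].
    pose proof (Pbelow r0 Hr0). nra.
Qed.

Lemma mean_value_ineq {X : Banach} (H h : R -> X) D u v M :
  u <= v -> (forall r, u <= r <= v -> D r) -> deriv_on H D h ->
  (forall r, u <= r <= v -> bnorm (h r) <= M) ->
  bnorm (bsub (H v) (H u)) <= M * (v - u).
Proof.
  intros Huv HD HH Hh. apply bnorm_le_of_le_add_eps. intros eps Heps.
  pose proof (mean_value_ineq_eta H h D u v M (eps / (v - u + 1)) Huv) as K.
  assert (eps / (v - u + 1) > 0) by (apply Rdiv_lt_0_compat; lra).
  eapply Rle_trans. apply K; auto.
  rewrite Rmult_plus_distr_r. apply Rplus_le_compat_l.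
  apply Rle_trans with (eps / (v - u + 1) * (v - u + 1)). apply Rmult_le_compat_l; lra.
  right; field; lra.
Qed.

Lemma mean_value_ineq_affine {X : Banach} (G g : R -> X) D u v c M :
  u <= v -> (forall r, u <= r <= v -> D r) -> deriv_on G D g ->
  (forall r, u <= r <= v -> bnorm (bsub (g r) c) <= M) ->
  bnorm (bsub (bsub (G v) (G u)) (bscal (v - u) c)) <= M * (v - u).
Proof.
  intros Huv HD HG Hg.
  set (H := fun r => bsub (G r) (bscal r c)).
  assert (HH : deriv_on H D (fun r => bsub (g r) c)).
  { unfold H. apply deriv_sub. auto. intros t Dt.
    apply lim_in_ext with (h := fun _ => c). intros s _ Hs. unfold diff_quot.
    rewrite <- bscal_sub_r, bscal_assoc, Rinv_l, bscal_1. auto. lra.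
    apply lim_in_const. }
  pose proof (mean_value_ineq H _ D u v M Huv HD HH Hg). unfold H in H0.
  rewrite bsub_sub_sub, <- bscal_sub_r in H0. auto.
Qed.

Lemma deriv_zero_const {X : Banach} (G : R -> X) D u v :
  u <= v -> (forall r, u <= r <= v -> D r) -> deriv_on G D (fun _ => bzero) -> G v = G u.
Proof.
  intros Huv HD HG. pose proof (mean_value_ineq G (fun _ => bzero) D u v 0 Huv HD HG) as K.
  apply bnorm_eq0_sub. pose proof (bnorm_nonneg (bsub (G v) (G u))).
  assert (bnorm (bsub (G v) (G u)) <= 0 * (v - u)). apply K. intros; rewrite bnorm_zero; lra.
  lra.
Qed.

Lemma cont_on_ball {X : Banach} (g : R -> X) D c :
  cont_on g D -> D c -> forall eps, eps > 0 -> exists d, d > 0 /\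
    forall z, D z -> Rabs (z - c) < d -> bnorm (bsub (g z) (g c)) < eps.
Proof.
  intros Hg Dc eps Heps. destruct (Hg c Dc eps Heps) as [d [Hd K]].
  exists d. split; [exact Hd|]. intros z Dz Hz.
  destruct (Req_dec z c) as [->|Hzc]; [rewrite bsub_diag, bnorm_zero; lra | apply K; auto].
Qed.

Lemma unif_close_extend {X : Banach} (g : R -> X) a r r' c d0 d1 eps :
  (forall z w, a <= z <= r -> a <= w <= r -> Rabs (z - w) < d1 -> bnorm (bsub (g z) (g w)) < eps) ->
  (forall z, a <= z <= r' -> Rabs (z - c) < d0 -> bnorm (bsub (g z) (g c)) < eps / 2) ->
  (forall z, r <= z <= r' -> Rabs (z - c) < d0 / 2) ->
  forall z w, a <= z <= r' -> a <= w <= r' -> Rabs (z - w) < Rmin d1 (d0 / 2) ->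
    bnorm (bsub (g z) (g w)) < eps.
Proof.
  intros Hr K0 Hnear z w Hz Hw Hzw.
  pose proof (Rmin_l d1 (d0 / 2)). pose proof (Rmin_r d1 (d0 / 2)).
  assert (Hfar : r < z \/ r < w -> bnorm (bsub (g z) (g w)) < eps).
  { intros Hzw'. assert (Rabs (z - c) < d0 /\ Rabs (w - c) < d0) as [Hzc Hwc].
    { apply Rabs_def2 in Hzw.
      destruct Hzw' as [Hzr | Hwr];
        [pose proof (Hnear z ltac:(lra)) as Hc | pose proof (Hnear w ltac:(lra)) as Hc];
        apply Rabs_def2 in Hc; split; apply Rabs_def1; lra. }
    eapply Rle_lt_trans; [apply (bsub_triangle _ (g c))|].
    rewrite (bnorm_sub_sym (g c)). pose proof (K0 z Hz Hzc). pose proof (K0 w Hw Hwc). lra. }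
  destruct (Rle_dec z r); destruct (Rle_dec w r); try (apply Hfar; lra).
  apply Hr; lra.
Qed.

Lemma cont_on_unif {X : Banach} (g : R -> X) D a b :
  a <= b -> (forall r, a <= r <= b -> D r) -> cont_on g D ->
  forall eps, eps > 0 -> exists delta, delta > 0 /\
    forall x y, a <= x <= b -> a <= y <= b -> Rabs (x - y) < delta -> bnorm (bsub (g x) (g y)) < eps.
Proof.
  intros Hab HD Hg eps Heps.
  assert (Hball : forall c, a <= c <= b -> exists d0, d0 > 0 /\
            forall z, a <= z <= b -> Rabs (z - c) < d0 -> bnorm (bsub (g z) (g c)) < eps / 2).
  { intros c Hc. destruct (cont_on_ball g D c Hg (HD c Hc) (eps / 2)) as [d0 [Hd0 K]]; [lra|].
    exists d0. split; [exact Hd0|]. intros z Hz. apply K, HD, Hz. }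
  apply (real_induction (fun r => exists delta, delta > 0 /\ forall x y, a <= x <= r -> a <= y <= r ->
            Rabs (x - y) < delta -> bnorm (bsub (g x) (g y)) < eps) a b); [lra | | | | lra].
  - exists 1. split; [lra|]. intros x y Hx Hy _.
    replace x with a by lra. replace y with a by lra. rewrite bsub_diag, bnorm_zero. lra.
  - intros x Hx Px. destruct (Hball x ltac:(lra)) as [d0 [Hd0 K0]].
    destruct (Px x ltac:(lra)) as [d1 [Hd1 K1]].
    exists (d0 / 2). split; [lra|]. intros y Hy Hyd.
    exists (Rmin d1 (d0 / 2)). split; [apply Rmin_pos; lra|].
    apply (unif_close_extend g a x y x d0 d1 eps K1).
    + intros z Hz. apply K0. lra.
    + intros z Hz. apply Rabs_def1; lra.
  - intros x Hx Pbelow. destruct (Hball x ltac:(lra)) as [d0 [Hd0 K0]].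
    set (r := Rmax a (x - d0 / 4)).
    assert (Hr : a <= r < x) by (unfold r; split; [apply Rmax_l | apply Rmax_lub_lt]; lra).
    assert (Hrd : x - d0 / 4 <= r) by apply Rmax_r.
    destruct (Pbelow r Hr) as [d1 [Hd1 K1]].
    exists (Rmin d1 (d0 / 2)). split; [apply Rmin_pos; lra|].
    apply (unif_close_extend g a r x x d0 d1 eps K1).
    + intros z Hz. apply K0. lra.
    + intros z Hz. apply Rabs_def1; lra.
Qed.

(** * The Riemann integral *)

Definition riemann_sum {X : Banach} (g : R -> X) n (p xi : nat -> R) : X :=
  bsum n (fun k => bscal (p (S k) - p k) (g (xi k))).

Definition tagged_part a b n (p xi : nat -> R) delta : Prop :=
  p O = a /\ p n = b /\ (forall k, (k < n)%nat -> p k <= xi k <= p (S k) /\ p (S k) - p k < delta).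

Lemma is_RInt_tagged {X : Banach} (g : R -> X) a b I :
  is_RInt g a b I <-> forall eps, eps > 0 -> exists delta, delta > 0 /\
    forall n p xi, tagged_part a b n p xi delta -> bnorm (bsub (riemann_sum g n p xi) I) < eps.
Proof.
  split; intros H eps Heps; destruct (H eps Heps) as [d [Hd K]]; exists d; split; auto.
  intros n p xi [H1 [H2 H3]]. apply K; auto.
  intros n p xi H1 H2 H3. apply K. split; auto.
Qed.

Lemma tagged_part_mono a b n p xi d :
  tagged_part a b n p xi d -> forall i j, (i <= j <= n)%nat -> p i <= p j.
Proof.
  intros [_ [_ H]] i j Hij. destruct Hij as [Hij Hjn]. induction Hij. lra.
  pose proof (H m ltac:(lia)). pose proof (IHHij ltac:(lia)). lra.
Qed.

Lemma tagged_part_range a b n p xi d :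
  tagged_part a b n p xi d -> forall k, (k <= n)%nat -> a <= p k <= b.
Proof.
  intros Ht k Hk. pose proof (tagged_part_mono _ _ _ _ _ _ Ht 0 k ltac:(lia)).
  pose proof (tagged_part_mono _ _ _ _ _ _ Ht k n ltac:(lia)). destruct Ht as [E0 [En _]]. lra.
Qed.

Lemma tagged_part_cell a b n p xi d k :
  tagged_part a b n p xi d -> (k < n)%nat ->
  a <= p k /\ p k <= xi k <= p (S k) /\ p (S k) <= b /\ p (S k) - p k < d.
Proof.
  intros Ht Hk. pose proof (tagged_part_range _ _ _ _ _ _ Ht k ltac:(lia)).
  pose proof (tagged_part_range _ _ _ _ _ _ Ht (S k) ltac:(lia)).
  destruct Ht as [_ [_ Hcells]]. destruct (Hcells k Hk). repeat split; lra.
Qed.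

Lemma riemann_sum_bound {X : Banach} (g : R -> X) a b n p xi d c M :
  tagged_part a b n p xi d -> (forall r, a <= r <= b -> bnorm (bsub (g r) c) <= M) ->
  bnorm (bsub (riemann_sum g n p xi) (bscal (b - a) c)) <= M * (b - a).
Proof.
  intros Ht HM. pose proof Ht as [H0 [Hn H]].
  assert (E : bscal (b - a) c = bsum n (fun k => bscal (p (S k) - p k) c)).
  { rewrite <- rsum_bscal, rsum_tele, H0, Hn. auto. }
  rewrite E. unfold riemann_sum. rewrite <- bsum_sub. eapply Rle_trans. apply bsum_norm.
  rewrite <- H0, <- Hn, <- rsum_tele, <- rsum_scal. apply rsum_le. intros k Hk.
  rewrite <- bscal_sub, bnorm_scal. destruct (H k Hk) as [Hx Hd].
  pose proof (tagged_part_cell _ _ _ _ _ _ k Ht Hk).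
  rewrite Rabs_right by lra. rewrite (Rmult_comm M). apply Rmult_le_compat_l. lra. apply HM. lra.
Qed.

Lemma is_RInt_derive {X : Banach} (G g : R -> X) a b :
  a <= b -> deriv_on G (fun s => a <= s <= b) g -> cont_on g (fun s => a <= s <= b) ->
  is_RInt g a b (bsub (G b) (G a)).
Proof.
  intros Hab HG Hg. apply is_RInt_tagged. intros eps Heps.
  set (e := eps / (b - a + 1)). assert (He : e > 0) by (apply Rdiv_lt_0_compat; lra).
  destruct (cont_on_unif g _ a b Hab (fun r H => H) Hg e He) as [d [Hd K]].
  exists d. split; auto. intros n p xi Ht. pose proof Ht as [H0 [Hn H]].
  unfold riemann_sum. rewrite <- H0, <- Hn, <- (bsum_tele n (fun k => G (p k))), <- bsum_sub.
  eapply Rle_lt_trans. apply bsum_norm.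
  apply Rle_lt_trans with (rsum n (fun k => e * (p (S k) - p k))).
  apply rsum_le. intros k Hk. destruct (H k Hk) as [Hx Hdk].
  pose proof (tagged_part_cell _ _ _ _ _ _ k Ht Hk).
  rewrite bnorm_sub_sym.
  apply (mean_value_ineq_affine G g (fun s => a <= s <= b) (p k) (p (S k)) (g (xi k)) e); auto. lra.
  intros r Hr. lra. intros r Hr. left. apply K. lra. lra. apply Rabs_def1; lra.
  rewrite rsum_scal, rsum_tele, H0, Hn.
  apply Rlt_le_trans with (e * (b - a + 1)). apply Rmult_lt_compat_l; lra.
  right; unfold e; field; lra.
Qed.

Lemma is_RInt_ext {X : Banach} (g h : R -> X) a b I :
  (forall s, a <= s <= b -> g s = h s) -> is_RInt h a b I -> is_RInt g a b I.
Proof.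
  intros E H0. apply is_RInt_tagged. pose proof (proj1 (is_RInt_tagged _ _ _ _) H0) as H.
  intros eps Heps. destruct (H eps Heps) as [d [Hd K]]. exists d. split; auto.
  intros n p xi Ht. replace (riemann_sum g n p xi) with (riemann_sum h n p xi). apply K; auto.
  unfold riemann_sum. apply bsum_ext. intros k Hk. rewrite E; auto.
  pose proof Ht as [_ [_ T]]. destruct (T k Hk) as [Tk _].
  pose proof (tagged_part_cell _ _ _ _ _ _ k Ht Hk). lra.
Qed.

(* Length of [[u, v]] inter [[x, y]]: two tagged partitions are compared on their common
   refinement. *)
Definition overlap u v x y := Rmax 0 (Rmin v y - Rmax u x).

Lemma overlap_chain u v x y z : u <= v -> x <= y <= z -> overlap u v x y + overlap u v y z = overlap u v x z.
Proof. intros. unfold overlap, Rmax, Rmin. repeat destruct Rle_dec; lra. Qed.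

Lemma overlap_nonneg u v x y : 0 <= overlap u v x y.
Proof. apply Rmax_l. Qed.

Lemma overlap_sym u v x y : overlap u v x y = overlap x y u v.
Proof. unfold overlap. rewrite (Rmin_comm v y), (Rmax_comm u x). auto. Qed.

Lemma overlap_full a b u v : a <= u <= v -> v <= b -> overlap u v a b = v - u.
Proof. intros. unfold overlap, Rmax, Rmin. repeat destruct Rle_dec; lra. Qed.

Lemma overlap_sum u v m (q : nat -> R) : u <= v -> (forall j, (j < m)%nat -> q j <= q (S j)) ->
  rsum m (fun j => overlap u v (q j) (q (S j))) = overlap u v (q O) (q m).
Proof.
  intros Huv Hq. induction m; simpl. unfold overlap, Rmax, Rmin. repeat destruct Rle_dec; lra.
  rewrite IHm by (intros; apply Hq; lia). apply overlap_chain; auto. split.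
  clear IHm. induction m. lra. pose proof (Hq m ltac:(lia)). pose proof (IHm ltac:(intros; apply Hq; lia)). lra.
  apply Hq; lia.
Qed.

Lemma overlap_pos_close u v x y xi eta d :
  u <= xi <= v -> x <= eta <= y -> v - u < d -> y - x < d -> overlap u v x y > 0 -> Rabs (xi - eta) < 2 * d.
Proof. intros. unfold overlap, Rmax, Rmin in *. apply Rabs_def1; repeat destruct Rle_dec; lra. Qed.

Lemma riemann_sum_refine {X : Banach} (g : R -> X) a b n p xi m q eta d d' :
  tagged_part a b n p xi d -> tagged_part a b m q eta d' ->
  riemann_sum g n p xi = bsum n (fun k => bsum m (fun j => bscal (overlap (p k) (p (S k)) (q j) (q (S j))) (g (xi k)))).
Proof.
  intros Hp Hq. unfold riemann_sum. apply bsum_ext. intros k Hk. rewrite <- rsum_bscal. f_equal.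
  pose proof Hq as [Hq0 [Hqm Q]]. pose proof Hp as [_ [_ P]]. destruct (P k Hk) as [Pk _].
  rewrite overlap_sum. rewrite Hq0, Hqm. symmetry. apply overlap_full.
  pose proof (tagged_part_range _ _ _ _ _ _ Hp k ltac:(lia)). lra.
  pose proof (tagged_part_range _ _ _ _ _ _ Hp (S k) ltac:(lia)). lra. lra.
  intros j Hj. destruct (Q j Hj). lra.
Qed.

Lemma riemann_sum_close {X : Banach} (g : R -> X) a b n p xi m q eta d eps :
  tagged_part a b n p xi d -> tagged_part a b m q eta d ->
  (forall x y, a <= x <= b -> a <= y <= b -> Rabs (x - y) < 2 * d -> bnorm (bsub (g x) (g y)) < eps) ->
  bnorm (bsub (riemann_sum g n p xi) (riemann_sum g m q eta)) <= eps * (b - a).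
Proof.
  intros Hp Hq Hg. rewrite (riemann_sum_refine g a b n p xi m q eta d d Hp Hq).
  rewrite (riemann_sum_refine g a b m q eta n p xi d d Hq Hp).
  rewrite (bsum_exchange m n).
  rewrite <- bsum_sub. eapply Rle_trans. apply bsum_norm.
  pose proof Hp as [P0 [Pn P]]. pose proof Hq as [Hq0 [Hqm Q]].
  rewrite <- P0, <- Pn, <- rsum_tele, <- rsum_scal. apply rsum_le. intros k Hk.
  rewrite <- bsum_sub. eapply Rle_trans. apply bsum_norm. destruct (P k Hk) as [Pk Pd].
  rewrite <- (overlap_full a b (p k) (p (S k))).
  2:{ pose proof (tagged_part_range _ _ _ _ _ _ Hp k ltac:(lia)). lra. }
  2:{ pose proof (tagged_part_range _ _ _ _ _ _ Hp (S k) ltac:(lia)). lra. }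
  rewrite <- Hq0, <- Hqm, <- overlap_sum. 2: lra. 2: { intros j Hj. destruct (Q j Hj). lra. }
  rewrite <- rsum_scal. apply rsum_le. intros j Hj. rewrite (overlap_sym (q j)).
  rewrite <- bscal_sub, bnorm_scal. rewrite Rabs_right by (apply Rle_ge, overlap_nonneg).
  destruct (Q j Hj) as [Qj Qd]. pose proof (overlap_nonneg (p k) (p (S k)) (q j) (q (S j))).
  destruct (Req_dec (overlap (p k) (p (S k)) (q j) (q (S j))) 0) as [E|E].
  rewrite E. lra. rewrite (Rmult_comm eps). apply Rmult_le_compat_l. lra. left. apply Hg.
  pose proof (tagged_part_cell _ _ _ _ _ _ k Hp Hk). lra.
  pose proof (tagged_part_cell _ _ _ _ _ _ j Hq Hj). lra.
  apply (overlap_pos_close (p k) (p (S k)) (q j) (q (S j))); auto; lra.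
Qed.

Lemma exists_nat_gt x : exists N : nat, x < INR N.
Proof.
  destruct (archimed x) as [H1 _]. destruct (Z_le_gt_dec 0 (up x)) as [Hz|Hz].
  exists (Z.to_nat (up x)). rewrite INR_IZR_INZ, Z2Nat.id; auto.
  exists 0%nat. simpl. assert (IZR (up x) < 0) by (apply IZR_lt; lia). lra.
Qed.

Definition unif_part a b n k := a + INR k * ((b - a) / INR n).

Lemma unif_part_tagged a b n d : a <= b -> (b - a) / INR (S n) < d ->
  tagged_part a b (S n) (unif_part a b (S n)) (unif_part a b (S n)) d.
Proof.
  intros Hab Hd. assert (HS : INR (S n) > 0) by (apply lt_0_INR; lia).
  assert (Hst : 0 <= (b - a) / INR (S n)) by (unfold Rdiv; apply Rmult_le_pos; [lra|left; apply Rinv_0_lt_compat; lra]).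
  unfold unif_part. split. simpl. ring. split. field. lra.
  set (h := (b - a) / INR (S n)) in *.
  intros k Hk. rewrite (S_INR k). split. lra. lra.
Qed.

Lemma unif_part_mesh a b d N m : a <= b -> d > 0 -> (b - a) / d < INR N -> (N <= m)%nat ->
  (b - a) / INR (S m) < d.
Proof.
  intros Hab Hd HN Hm. assert (HS : INR (S m) > 0) by (apply lt_0_INR; lia).
  assert (INR N <= INR (S m)) by (apply le_INR; lia).
  apply Rmult_lt_reg_r with (INR (S m)). lra. unfold Rdiv. rewrite Rmult_assoc, Rinv_l by lra.
  rewrite Rmult_1_r. apply Rmult_lt_compat_r with (r := d) in HN; auto.
  unfold Rdiv in HN. rewrite Rmult_assoc, Rinv_l, Rmult_1_r in HN by lra. nra.
Qed.

Lemma tagged_part_exists a b d : a <= b -> d > 0 -> exists n p xi, tagged_part a b n p xi d.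
Proof.
  intros Hab Hd. destruct (exists_nat_gt ((b - a) / d)) as [N HN].
  exists (S N), (unif_part a b (S N)), (unif_part a b (S N)). apply unif_part_tagged; auto.
  eapply unif_part_mesh; eauto.
Qed.

Definition unif_riemann_sum {X : Banach} (g : R -> X) a b m : X :=
  riemann_sum g (S m) (unif_part a b (S m)) (unif_part a b (S m)).

Lemma unif_riemann_sum_close {X : Banach} (g : R -> X) D a b :
  a <= b -> (forall r, a <= r <= b -> D r) -> cont_on g D ->
  forall e, e > 0 -> exists d N, d > 0 /\
    (forall m, (N <= m)%nat -> tagged_part a b (S m) (unif_part a b (S m)) (unif_part a b (S m)) d) /\
    forall n p xi m, tagged_part a b n p xi d -> (N <= m)%nat ->
      bnorm (bsub (riemann_sum g n p xi) (unif_riemann_sum g a b m)) <= e * (b - a).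
Proof.
  intros Hab HD Hg e He. destruct (cont_on_unif g D a b Hab HD Hg e He) as [d [Hd K]].
  destruct (exists_nat_gt ((b - a) / (d / 2))) as [N HN].
  assert (Hfine : forall m, (N <= m)%nat ->
            tagged_part a b (S m) (unif_part a b (S m)) (unif_part a b (S m)) (d / 2)).
  { intros m Hm. apply unif_part_tagged; [exact Hab|]. apply (unif_part_mesh a b (d / 2) N); auto; lra. }
  exists (d / 2), N. split; [lra | split; [exact Hfine|]]. intros n p xi m Ht Hm.
  apply (riemann_sum_close g a b _ _ _ _ _ _ (d / 2) e Ht (Hfine m Hm)).
  intros x y Hx Hy Hxy. apply K; auto. lra.
Qed.

(* The Riemann sums over uniform partitions form a Cauchy sequence; its limit is the integral. *)
Lemma ex_RInt_cont {X : Banach} (g : R -> X) D a b :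
  a <= b -> (forall r, a <= r <= b -> D r) -> cont_on g D -> exists I, is_RInt g a b I.
Proof.
  intros Hab HD Hg. pose proof (unif_riemann_sum_close g D a b Hab HD Hg) as Hclose.
  destruct (bcomplete (unif_riemann_sum g a b)) as [I HI].
  { intros eps Heps. destruct (Hclose (eps / (b - a + 1))) as [d [N [Hd [Hfine K]]]].
    { apply Rdiv_lt_0_compat; lra. }
    exists N. intros m m' Hm Hm'.
    eapply Rle_lt_trans; [apply (K _ _ _ m' (Hfine m Hm) Hm')|].
    apply Rlt_le_trans with (eps / (b - a + 1) * (b - a + 1));
      [apply Rmult_lt_compat_l | right; field]; [apply Rdiv_lt_0_compat | |]; lra. }
  exists I. apply is_RInt_tagged. intros eps Heps.
  destruct (Hclose (eps / (2 * (b - a + 1)))) as [d [N1 [Hd [_ K]]]]; [apply Rdiv_lt_0_compat; lra|].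
  exists d. split; [exact Hd|]. intros n p xi Ht.
  destruct (HI (eps / 2)) as [N2 HN2]; [lra|].
  set (m := Nat.max N1 N2).
  eapply Rle_lt_trans; [apply (bsub_triangle _ (unif_riemann_sum g a b m))|].
  assert (bnorm (bsub (unif_riemann_sum g a b m) I) < eps / 2) by (apply HN2; unfold m; lia).
  assert (bnorm (bsub (riemann_sum g n p xi) (unif_riemann_sum g a b m)) <= eps / (2 * (b - a + 1)) * (b - a))
    by (apply K; [exact Ht | unfold m; lia]).
  assert (eps / (2 * (b - a + 1)) * (b - a) < eps / 2).
  { apply Rlt_le_trans with (eps / (2 * (b - a + 1)) * (b - a + 1)); [apply Rmult_lt_compat_l|];
      [apply Rdiv_lt_0_compat | | right; field]; lra. }
  lra.
Qed.

Lemma tagged_part_concat {X : Banach} (g : R -> X) a c b n1 p1 x1 n2 p2 x2 d :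
  tagged_part a c n1 p1 x1 d -> tagged_part c b n2 p2 x2 d ->
  let pc := fun k => if Nat.leb k n1 then p1 k else p2 (k - n1)%nat in
  let xc := fun k => if Nat.ltb k n1 then x1 k else x2 (k - n1)%nat in
  tagged_part a b (n1 + n2) pc xc d /\
  riemann_sum g (n1 + n2) pc xc = badd (riemann_sum g n1 p1 x1) (riemann_sum g n2 p2 x2).
Proof.
  intros H1 H2 pc xc. destruct H1 as [A0 [An1 A]]. destruct H2 as [B0 [Bn2 B]].
  assert (Pc1 : forall k, (k <= n1)%nat -> pc k = p1 k).
  { intros k Hk. unfold pc. destruct (Nat.leb_spec k n1); auto. lia. }
  assert (Pc2 : forall k, (n1 <= k)%nat -> pc k = p2 (k - n1)%nat).
  { intros k Hk. unfold pc. destruct (Nat.leb_spec k n1); auto.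
    replace k with n1 by lia. rewrite Nat.sub_diag, B0, An1. auto. }
  assert (Xc1 : forall k, (k < n1)%nat -> xc k = x1 k).
  { intros k Hk. unfold xc. destruct (Nat.ltb_spec k n1); auto. lia. }
  assert (Xc2 : forall k, (n1 <= k)%nat -> xc k = x2 (k - n1)%nat).
  { intros k Hk. unfold xc. destruct (Nat.ltb_spec k n1); auto. lia. }
  split. split. rewrite Pc1 by lia. auto. split. rewrite Pc2 by lia. replace (n1 + n2 - n1)%nat with n2 by lia. auto.
  intros k Hk. destruct (Nat.lt_ge_cases k n1).
  rewrite !Pc1, Xc1 by lia. apply A; auto.
  rewrite !Pc2, Xc2 by lia. replace (S k - n1)%nat with (S (k - n1)) by lia. apply B; lia.
  unfold riemann_sum. rewrite bsum_split. f_equal.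
  apply bsum_ext. intros k Hk. rewrite !Pc1, Xc1 by lia. auto.
  apply bsum_ext. intros k Hk. rewrite !Pc2, Xc2 by lia.
  replace (S (n1 + k) - n1)%nat with (S k) by lia. replace (n1 + k - n1)%nat with k by lia. auto.
Qed.

Lemma tagged_part_weaken a b n p xi d d' :
  tagged_part a b n p xi d -> d <= d' -> tagged_part a b n p xi d'.
Proof.
  intros [H0 [Hn H]] Hd. split; [exact H0 | split; [exact Hn|]].
  intros k Hk. destruct (H k Hk). split; [assumption | lra].
Qed.

Lemma is_RInt_incr_bound {X : Banach} (g : R -> X) a t s It Is c M :
  a <= t -> t <= s -> is_RInt g a t It -> is_RInt g a s Is ->
  (forall r, t <= r <= s -> bnorm (bsub (g r) c) <= M) ->
  bnorm (bsub (bsub Is It) (bscal (s - t) c)) <= M * (s - t).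
Proof.
  intros Hat Hts Ht Hs HM. apply bnorm_le_of_le_add_eps. intros eps Heps.
  destruct (proj1 (is_RInt_tagged _ _ _ _) Ht (eps / 2)) as [d1 [Hd1 K1]]; [lra|].
  destruct (proj1 (is_RInt_tagged _ _ _ _) Hs (eps / 2)) as [d2 [Hd2 K2]]; [lra|].
  set (d := Rmin d1 d2). assert (Hd : d > 0) by (apply Rmin_pos; lra).
  assert (Hd1' : d <= d1) by apply Rmin_l. assert (Hd2' : d <= d2) by apply Rmin_r.
  destruct (tagged_part_exists a t d Hat Hd) as [n1 [p1 [x1 T1]]].
  destruct (tagged_part_exists t s d Hts Hd) as [n2 [p2 [x2 T2]]].
  destruct (tagged_part_concat g a t s n1 p1 x1 n2 p2 x2 d T1 T2) as [T E].
  set (R1 := riemann_sum g n1 p1 x1) in *. set (R2 := riemann_sum g n2 p2 x2) in *.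
  assert (E1 : bnorm (bsub R1 It) < eps / 2) by (apply K1, (tagged_part_weaken _ _ _ _ _ d); assumption).
  assert (E2 : bnorm (bsub Is (badd R1 R2)) < eps / 2).
  { rewrite bnorm_sub_sym, <- E. apply K2, (tagged_part_weaken _ _ _ _ _ d); assumption. }
  pose proof (riemann_sum_bound g t s n2 p2 x2 d c M T2 HM) as E3. fold R2 in E3.
  eapply Rle_trans; [apply (bsub_triangle _ (bsub (badd R1 R2) It))|].
  rewrite bsub_sub_common, bsub_add_sub_regroup.
  pose proof (bnorm_triangle (bsub R1 It) (bsub R2 (bscal (s - t) c))). lra.
Qed.

Lemma is_RInt_incr_bound_abs {X : Banach} (g : R -> X) a t s It Is c M :
  a <= t -> a <= s -> is_RInt g a t It -> is_RInt g a s Is ->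
  (forall r, Rmin t s <= r <= Rmax t s -> bnorm (bsub (g r) c) <= M) ->
  bnorm (bsub (bsub Is It) (bscal (s - t) c)) <= M * Rabs (s - t).
Proof.
  intros Hat Has Ht Hs HM. destruct (Rle_dec t s) as [Hts|Hst].
  - rewrite Rabs_right by lra. apply (is_RInt_incr_bound g a t s); [lra | lra | exact Ht | exact Hs |].
    intros r Hr. apply HM. rewrite Rmin_left, Rmax_right; lra.
  - rewrite Rabs_left by lra.
    replace (bsub (bsub Is It) (bscal (s - t) c)) with (bopp (bsub (bsub It Is) (bscal (t - s) c))).
    + rewrite bnorm_opp. replace (- (s - t)) with (t - s) by ring.
      apply (is_RInt_incr_bound g a s t); [lra | lra | exact Hs | exact Ht |].
      intros r Hr. apply HM. rewrite Rmin_right, Rmax_left; lra.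
    + unfold bsub. rewrite !bopp_add, !bopp_opp, !bopp_bscal.
      replace (- (s - t)) with (t - s) by ring. f_equal. apply badd_comm.
Qed.

Lemma bnorm_diff_quot_sub {X : Banach} (G : R -> X) t s l e :
  s <> t -> bnorm (bsub (bsub (G s) (G t)) (bscal (s - t) l)) <= e * Rabs (s - t) ->
  bnorm (bsub (diff_quot G t s) l) <= e.
Proof.
  intros Hst Hb.
  assert (E : bsub (diff_quot G t s) l = bscal (/ (s - t)) (bsub (bsub (G s) (G t)) (bscal (s - t) l))).
  { unfold diff_quot. rewrite (bscal_sub _ (bsub (G s) (G t))), bscal_assoc, Rinv_l, bscal_1 by lra.
    reflexivity. }
  assert (Hpos : Rabs (s - t) > 0) by (apply Rabs_pos_lt; lra).
  rewrite E, bnorm_scal, Rabs_inv.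
  apply Rmult_le_reg_l with (Rabs (s - t)); [exact Hpos|].
  rewrite <- Rmult_assoc, Rinv_r by lra. lra.
Qed.

Lemma deriv_on_is_RInt {X : Banach} (g G : R -> X) a :
  cont_on g (fun t => a <= t) -> (forall t, a <= t -> is_RInt g a t (G t)) ->
  deriv_on G (fun t => a <= t) g.
Proof.
  intros Hg HG t Ht eps Heps.
  destruct (cont_on_ball g _ t Hg Ht (eps / 2)) as [d [Hd K]]; [lra|].
  exists d. split; [exact Hd|]. intros s Hs Hst Hsd.
  apply Rle_lt_trans with (eps / 2); [|lra].
  apply bnorm_diff_quot_sub; [exact Hst|].
  apply (is_RInt_incr_bound_abs g a t s); auto.
  intros r Hr. left. apply K.
  - unfold Rmin in Hr. destruct (Rle_dec t s); lra.
  - apply Rabs_def2 in Hsd. apply Rabs_def1; unfold Rmin, Rmax in Hr; destruct (Rle_dec t s); lra.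
Qed.

Lemma is_RInt_point {X : Banach} (g : R -> X) a I : is_RInt g a a I -> I = bzero.
Proof.
  intros HI. apply eq_of_bnorm_sub_small. intros eps Heps.
  destruct (HI eps Heps) as [d [Hd K]]. rewrite bnorm_sub_sym.
  specialize (K O (fun _ => a) (fun _ => a) eq_refl eq_refl). simpl in K.
  apply K. intros; lia.
Qed.

Lemma primitive_exists {X : Banach} (g : R -> X) a :
  cont_on g (fun t => a <= t) ->
  exists G, G a = bzero /\ deriv_on G (fun t => a <= t) g /\ (forall t, a <= t -> is_RInt g a t (G t)).
Proof.
  intros Hg.
  assert (HI : forall t, exists I, a <= t -> is_RInt g a t I).
  { intros t. destruct (Rle_dec a t) as [Hat|Hat].
    - destruct (ex_RInt_cont g _ a t Hat (fun r Hr => proj1 Hr) Hg) as [I HI]. exists I; auto.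
    - exists bzero. intros; contradiction. }
  destruct (choice _ HI) as [G HG].
  exists G. split; [|split; [apply deriv_on_is_RInt|]]; auto.
  apply (is_RInt_point g a), HG, Rle_refl.
Qed.

(** * Primitives vanishing on the negative half-line *)

Definition cut_below {X : Banach} (c : R) (G : R -> X) (t : R) : X :=
  if Rle_dec t c then bzero else G t.

Lemma cut_below_cont {X : Banach} (G : R -> X) c :
  cont_on G (fun t => c <= t) -> G c = bzero -> cont_on (cut_below c G) (fun _ => True).
Proof.
  intros HG Hc t _. unfold cut_below at 2. destruct (Rtotal_order t c) as [Hlt|[<-|Hgt]].
  - destruct Rle_dec; [|lra].
    apply lim_in_local with (h := fun _ => bzero) (D' := fun _ => True) (r := c - t); [lra | | apply lim_in_const].
    intros s _ _ Hs. apply Rabs_def2 in Hs. split; [exact I|].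
    unfold cut_below. destruct Rle_dec; [reflexivity | lra].
  - destruct Rle_dec; [|lra]. intros eps Heps. destruct (HG t (Rle_refl t) eps Heps) as [d [Hd K]].
    exists d. split; [exact Hd|]. intros s _ Hs Hsd. unfold cut_below.
    destruct (Rle_dec s t); [rewrite bsub_diag, bnorm_zero; lra|].
    rewrite <- Hc. apply K; [lra | exact Hs | exact Hsd].
  - destruct Rle_dec; [lra|].
    apply lim_in_local with (h := G) (D' := fun t => c <= t) (r := t - c); [lra | | apply HG; lra].
    intros s _ _ Hs. apply Rabs_def2 in Hs. split; [lra|].
    unfold cut_below. destruct Rle_dec; [lra | reflexivity].
Qed.

Lemma causal_primitive_ex {X : Banach} (g : R -> X) :
  cont_on g (fun _ => True) -> (forall t, t <= 0 -> g t = bzero) ->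
  exists H, deriv_on H (fun _ => True) g /\ (forall t, t <= 0 -> H t = bzero).
Proof.
  intros Hg Hz.
  destruct (primitive_exists g (-1)) as [G0 [G0a [G0d _]]].
  { eapply cont_on_subset. apply Hg. intros; exact I. }
  assert (G0z : forall t, -1 <= t <= 0 -> G0 t = bzero).
  { intros t Ht. rewrite <- G0a. apply (deriv_zero_const G0 (fun s => -1 <= s <= t)); [lra | intros; lra |].
    apply (deriv_ext G0 G0 (fun _ => bzero) g); [auto | intros s Hs; symmetry; apply Hz; lra |].
    eapply deriv_on_subset. apply G0d. simpl; intros; lra. }
  exists (cut_below 0 G0). split.
  - intros t _. destruct (Rle_dec t (-1/2)).
    + rewrite Hz by lra.
      apply lim_in_local with (h := fun _ => bzero) (D' := fun _ => True) (r := 1/2); [lra | | apply lim_in_const].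
      intros s _ _ Hs. apply Rabs_def2 in Hs. split; auto. unfold diff_quot, cut_below.
      destruct Rle_dec; [|lra]. destruct Rle_dec; [|lra]. rewrite bsub_diag, bscal_zero. auto.
    + assert (E : forall s, -1 <= s -> cut_below 0 G0 s = G0 s).
      { intros s Hs. unfold cut_below. destruct Rle_dec; auto. rewrite G0z; auto. }
      apply (deriv_local _ G0 g (fun _ => True) (fun s => -1 <= s) t (t + 1)); auto; try lra.
      * apply E; lra.
      * intros s _ _ Hs. apply Rabs_def2 in Hs. split; [lra | apply E; lra].
      * apply G0d. lra.
  - intros t Ht. unfold cut_below. destruct Rle_dec; auto. lra.
Qed.

Definition causal_primitive {X : Banach} (g : R -> X) : R -> X :=
  epsilon (inhabits g) (fun H => deriv_on H (fun _ => True) g /\ (forall t, t <= 0 -> H t = bzero)).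

Lemma causal_primitive_spec {X : Banach} (g : R -> X) :
  cont_on g (fun _ => True) -> (forall t, t <= 0 -> g t = bzero) ->
  deriv_on (causal_primitive g) (fun _ => True) g /\ (forall t, t <= 0 -> causal_primitive g t = bzero).
Proof.
  intros Hg Hz. unfold causal_primitive.
  apply epsilon_spec. apply causal_primitive_ex; assumption.
Qed.

(* [f] is only assumed continuous on [0, oo), so its primitive is cut off at [0] by hand. *)
Definition causal_primitive0 {X : Banach} (f : R -> X) : R -> X :=
  cut_below 0 (epsilon (inhabits f) (fun G => G 0 = bzero /\ deriv_on G (fun t => 0 <= t) f)).

Lemma causal_primitive0_spec {X : Banach} (f : R -> X) :
  cont_on f (fun t => 0 <= t) ->
  cont_on (causal_primitive0 f) (fun _ => True) /\ (forall t, t <= 0 -> causal_primitive0 f t = bzero) /\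
  deriv_on (causal_primitive0 f) (fun t => 0 <= t) f.
Proof.
  intros Hf. unfold causal_primitive0.
  set (G := epsilon _ _).
  assert (HG : G 0 = bzero /\ deriv_on G (fun t => 0 <= t) f).
  { apply epsilon_spec. destruct (primitive_exists f 0 Hf) as [G' [G'0 [G'd _]]]. exists G'; auto. }
  destruct HG as [G0 Gd]. split; [|split].
  - apply cut_below_cont; auto. eapply deriv_on_cont; eauto.
  - intros t Ht. unfold cut_below. destruct Rle_dec; auto. lra.
  - apply deriv_ext with (H := G) (h := f); auto. intros s Hs. unfold cut_below. destruct Rle_dec; auto.
    replace s with 0 by lra. auto.
Qed.

Fixpoint iter_primitive {X : Banach} (f : R -> X) (n : nat) : R -> X :=
  match n with O => causal_primitive0 f | S m => causal_primitive (iter_primitive f m) end.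

Lemma iter_primitive_spec {X : Banach} (f : R -> X) :
  cont_on f (fun t => 0 <= t) ->
  forall n, cont_on (iter_primitive f n) (fun _ => True) /\ (forall t, t <= 0 -> iter_primitive f n t = bzero) /\
    deriv_on (iter_primitive f (S n)) (fun _ => True) (iter_primitive f n).
Proof.
  intros Hf. induction n as [|n [Cn [Zn Dn]]].
  - destruct (causal_primitive0_spec f Hf) as [C0 [Z0 _]].
    split; [exact C0 | split; [exact Z0 | apply causal_primitive_spec; assumption]].
  - destruct (causal_primitive_spec (iter_primitive f n) Cn Zn) as [_ Z].
    assert (C : cont_on (iter_primitive f (S n)) (fun _ => True)) by (eapply deriv_on_cont; eauto).
    split; [exact C | split; [exact Z | apply causal_primitive_spec; assumption]].
Qed.

(** * Existence: the series solution *)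

Lemma IZR_le_INR_Z_to_nat z : IZR z <= INR (Z.to_nat z).
Proof.
  destruct (Z_le_gt_dec 0 z).
  - rewrite INR_IZR_INZ, Z2Nat.id by lia. lra.
  - replace (Z.to_nat z) with O by (destruct z; simpl; auto; lia).
    assert (IZR z < 0) by (apply IZR_lt; lia). simpl. lra.
Qed.

Definition nblocks (tau s : R) : nat := Z.to_nat (up (s / (2 * tau))).

Lemma nblocks_spec tau s : tau > 0 -> s <= INR (nblocks tau s) * (2 * tau).
Proof.
  intros Ht. unfold nblocks.
  pose proof (IZR_le_INR_Z_to_nat (up (s / (2 * tau)))).
  destruct (archimed (s / (2 * tau))) as [Hup _].
  replace s with (s / (2 * tau) * (2 * tau)) at 1 by (field; lra).
  apply Rmult_le_compat_r; lra.
Qed.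

Section SeriesSolution.

Context {X : Banach}.
Variables (Om : X -> X) (tau : R) (f : R -> X).
Hypotheses (HL : blinear Om) (HB : bbounded Om) (Htau : tau > 0)
  (Hf : cont_on f (fun t => 0 <= t)).

(* [series 1] is the solution and [series 0] its derivative. *)
Definition series_term (k m : nat) (s : R) : X :=
  opow Om (2 * m) (iter_primitive f (k + 2 * m) (s - INR m * (2 * tau))).

Definition series (k : nat) (s : R) : X :=
  bsum (nblocks tau s) (fun m => series_term k m s).

Lemma series_term_vanish k N m s :
  s <= INR N * (2 * tau) -> (N <= m)%nat -> series_term k m s = bzero.
Proof.
  intros Hs Hm. unfold series_term.
  destruct (iter_primitive_spec f Hf (k + 2 * m)) as [_ [-> _]]; [apply opow_zero, HL|].
  apply le_INR in Hm. nra.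
Qed.

Lemma series_trunc k N s :
  s <= INR N * (2 * tau) -> series k s = bsum N (fun m => series_term k m s).
Proof.
  intros Hs. unfold series.
  apply bsum_eq_of_tails_zero; intros m Hm.
  - apply (series_term_vanish k (nblocks tau s) m s); [apply nblocks_spec, Htau | exact Hm].
  - apply (series_term_vanish k N m s); assumption.
Qed.

Lemma series_nonpos k s : s <= 0 -> series k s = bzero.
Proof.
  intros Hs. rewrite (series_trunc k 0) by (simpl; lra). reflexivity.
Qed.

Lemma series_near k t s :
  Rabs (s - t) < 1 -> series k s = bsum (nblocks tau (t + 1)) (fun m => series_term k m s).
Proof.
  intros Hst. apply series_trunc. pose proof (nblocks_spec tau (t + 1) Htau).
  apply Rabs_def2 in Hst. lra.
Qed.

Lemma cont_series k : cont_on (series k) (fun _ => True).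
Proof.
  intros t _. set (N := nblocks tau (t + 1)).
  apply lim_in_local with (h := fun s => bsum N (fun m => series_term k m s)) (D' := fun _ => True) (r := 1);
    [lra | intros s _ _ Hs; split; [exact I | apply (series_near k t), Hs] |].
  rewrite (series_near k t t) by (rewrite Rminus_diag, Rabs_R0; lra).
  apply (cont_bsum N (fun m s => series_term k m s)); [|exact I]. intros m _. unfold series_term.
  apply cont_op; try apply opow_linear; try apply opow_bounded; auto.
  apply (cont_shift (iter_primitive f (k + 2 * m)) (fun _ => True)); [|auto].
  apply iter_primitive_spec, Hf.
Qed.

Lemma deriv_series k : deriv_on (series (S k)) (fun _ => True) (series k).
Proof.
  intros t _. set (N := nblocks tau (t + 1)).
  apply (deriv_local _ (fun s => bsum N (fun m => series_term (S k) m s)) (series k)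
           (fun _ => True) (fun _ => True) t 1); [lra | exact I | exact I | | |].
  - apply (series_near (S k) t). rewrite Rminus_diag, Rabs_R0. lra.
  - intros s _ _ Hs. split; [exact I | apply (series_near (S k) t), Hs].
  - rewrite (series_near k t t) by (rewrite Rminus_diag, Rabs_R0; lra).
    apply (deriv_bsum N (fun m s => series_term (S k) m s) (fun m s => series_term k m s)); [|exact I].
    intros m _. unfold series_term.
    apply deriv_op; try apply opow_linear; try apply opow_bounded; auto.
    apply (deriv_shift (iter_primitive f (S (k + 2 * m))) _ (fun _ => True)); [|auto].
    apply iter_primitive_spec, Hf.
Qed.

Lemma deriv_series0 :
  deriv_on (series 0) (fun t => 0 <= t) (fun s => badd (f s) (Om (Om (series 1 (s - 2 * tau))))).
Proof.
  intros t Ht. set (N := nblocks tau (t + 1)).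
  assert (HN : t + 1 <= INR N * (2 * tau)) by (apply nblocks_spec, Htau).
  set (H := fun s => badd (series_term 0 0 s) (bsum N (fun m => series_term 0 (S m) s))).
  assert (E : forall s, Rabs (s - t) < 1 -> series 0 s = H s).
  { intros s Hs. unfold H. rewrite <- (bsum_recl N (fun m => series_term 0 m s)).
    apply series_trunc. rewrite S_INR. apply Rabs_def2 in Hs. lra. }
  apply (deriv_local _ H (fun s => badd (f s) (Om (Om (series 1 (s - 2 * tau)))))
           (fun t => 0 <= t) (fun t => 0 <= t) t 1); [lra | exact Ht | exact Ht | | |].
  - apply E. rewrite Rminus_diag, Rabs_R0. lra.
  - intros s Hs _ Hst. split; [exact Hs | apply E, Hst].
  - set (H' := fun s => badd (f (s - INR 0 * (2 * tau)))
      (bsum N (fun m => opow Om (2 * S m) (iter_primitive f (S (2 * m)) (s - INR (S m) * (2 * tau)))))).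
    assert (DH : deriv_on H (fun t => 0 <= t) H').
    { apply deriv_add; [|apply (deriv_bsum N (fun m s => series_term 0 (S m) s))].
      - apply (deriv_shift (iter_primitive f 0) f (fun t => 0 <= t)); [|simpl; intros; lra].
        apply causal_primitive0_spec, Hf.
      - intros m _. unfold series_term.
        apply deriv_op; try apply opow_linear; try apply opow_bounded; auto.
        replace (0 + 2 * S m)%nat with (S (S (2 * m))) by lia.
        apply (deriv_shift (iter_primitive f (S (S (2 * m)))) _ (fun _ => True)); [|auto].
        apply iter_primitive_spec, Hf. }
    replace (badd (f t) (Om (Om (series 1 (t - 2 * tau))))) with (H' t); [apply DH, Ht|].
    unfold H'. change (INR 0) with 0. rewrite Rmult_0_l, Rminus_0_r. f_equal.
    rewrite (series_trunc 1 N) by lra.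
    rewrite !(bsum_lin Om) by exact HL. apply bsum_ext. intros m _. unfold series_term.
    replace (2 * S m)%nat with (S (S (2 * m))) by lia. cbn [opow].
    rewrite S_INR. do 4 f_equal. ring.
Qed.

End SeriesSolution.

Lemma classical_solution_exists {X : Banach} (Om : X -> X) (tau : R) (f : R -> X) :
  blinear Om -> bbounded Om -> tau > 0 -> cont_on f (fun t => 0 <= t) ->
  exists x : R -> X, classical_solution tau Om f x.
Proof.
  intros HL HB Htau Hf.
  set (x := series Om tau f 1). set (x1 := series Om tau f 0).
  exists x, x1, (fun _ => bzero), (fun s => badd (f s) (Om (Om (x (s - 2 * tau))))).
  assert (Dx : deriv_on x (fun _ => True) x1) by (apply deriv_series; auto).
  assert (Cx : cont_on x (fun _ => True)) by (apply cont_series; auto).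
  assert (Cx1 : cont_on x1 (fun _ => True)) by (apply cont_series; auto).
  repeat split.
  - eapply deriv_on_subset; [exact Dx | intros; exact I].
  - eapply cont_on_subset; [exact Cx1 | intros; exact I].
  - apply deriv_zero. intros s Hs. apply series_nonpos; auto. lra.
  - apply cont_const.
  - apply deriv_series0; auto.
  - apply cont_add; [exact Hf|].
    apply cont_op, cont_op, (cont_shift x (fun _ => True)); auto.
  - intros t _. apply badd_sub_cancel.
  - intros t Ht. apply series_nonpos; auto. lra.
Qed.

(** * The kernel [x2] as a finite sum *)

Definition tpow (k : nat) (u : R) : R := (Rmax 0 u) ^ k.

Lemma tpow_pos k u : 0 <= u -> tpow k u = u ^ k.
Proof. intros. unfold tpow. rewrite Rmax_right; auto. Qed.

Lemma tpow_nonpos k u : u <= 0 -> tpow (S k) u = 0.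
Proof. intros. unfold tpow. rewrite Rmax_left; auto. simpl. ring. Qed.

Lemma derivable_pt_lim_local (f g : R -> R) u l r :
  r > 0 -> (forall v, Rabs (v - u) < r -> f v = g v) -> derivable_pt_lim g u l -> derivable_pt_lim f u l.
Proof.
  intros Hr E H eps Heps. destruct (H eps Heps) as [d K].
  assert (Hp : 0 < Rmin d r) by (apply Rmin_pos; [apply cond_pos|lra]).
  exists (mkposreal _ Hp). intros h Hh0 Hh. simpl in Hh.
  pose proof (Rmin_l d r). pose proof (Rmin_r d r).
  rewrite (E (u + h)), (E u). apply K; auto. lra.
  replace (u - u) with 0 by ring. rewrite Rabs_R0. lra.
  replace (u + h - u) with h by ring. lra.
Qed.

Lemma derivable_pt_lim_ext (f g : R -> R) u l :
  (forall v, f v = g v) -> derivable_pt_lim g u l -> derivable_pt_lim f u l.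
Proof. intros E. apply derivable_pt_lim_local with (r := 1). lra. intros; auto. Qed.

Lemma tpow_le_sqr k h : Rabs h <= 1 -> 0 <= tpow (S (S k)) h <= h * h.
Proof.
  intros Hh. unfold tpow. set (m := Rmax 0 h).
  assert (Hm : 0 <= m <= Rabs h).
  { unfold m, Rmax. destruct Rle_dec; split; auto using Rle_abs, Rabs_pos; lra. }
  assert (Hmk : 0 <= m ^ k <= 1) by (split; [apply pow_le | rewrite <- (pow1 k); apply pow_incr]; lra).
  change (m ^ S (S k)) with (m * (m * m ^ k)).
  assert (Hsq : m * m <= h * h).
  { replace (h * h) with (Rabs h * Rabs h) by (rewrite <- Rabs_mult; apply Rabs_right; nra).
    apply Rmult_le_compat; lra. }
  split; [apply Rmult_le_pos; [|apply Rmult_le_pos]; lra | nra].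
Qed.

Lemma derivable_pt_lim_tpow_0 k : derivable_pt_lim (tpow (S (S k))) 0 0.
Proof.
  intros eps Heps.
  assert (Hp : 0 < Rmin 1 eps) by (apply Rmin_pos; lra).
  exists (mkposreal _ Hp). intros h Hh0 Hh. simpl in Hh.
  pose proof (Rmin_l 1 eps). pose proof (Rmin_r 1 eps).
  rewrite Rplus_0_l, (tpow_nonpos _ 0), Rminus_0_r, Rminus_0_r by lra.
  destruct (tpow_le_sqr k h) as [Hlo Hhi]; [lra|].
  assert (Habs : Rabs h > 0) by (apply Rabs_pos_lt, Hh0).
  unfold Rdiv. rewrite Rabs_mult, Rabs_inv, (Rabs_right (tpow _ h)) by lra.
  apply Rle_lt_trans with (Rabs h * Rabs h * / Rabs h).
  - apply Rmult_le_compat_r; [left; apply Rinv_0_lt_compat; lra|].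
    replace (Rabs h * Rabs h) with (h * h) by (rewrite <- Rabs_mult; symmetry; apply Rabs_right; nra).
    exact Hhi.
  - replace (Rabs h * Rabs h * / Rabs h) with (Rabs h) by (field; lra). lra.
Qed.

Lemma derivable_pt_lim_tpow k u : derivable_pt_lim (tpow (S (S k))) u (INR (S (S k)) * tpow (S k) u).
Proof.
  destruct (Rtotal_order u 0) as [Hlt|[->|Hgt]].
  - rewrite tpow_nonpos, Rmult_0_r by lra.
    apply derivable_pt_lim_local with (g := fun _ => 0) (r := - u); [lra | | apply derivable_pt_lim_const].
    intros v Hv. apply Rabs_def2 in Hv. apply tpow_nonpos. lra.
  - rewrite tpow_nonpos, Rmult_0_r by lra. apply derivable_pt_lim_tpow_0.
  - apply derivable_pt_lim_local with (g := fun v => v ^ S (S k)) (r := u); [lra | |].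
    + intros v Hv. apply Rabs_def2 in Hv. apply tpow_pos. lra.
    + rewrite tpow_pos by lra. apply derivable_pt_lim_pow.
Qed.

Lemma continuity_pt_Rmax0 : forall u, continuity_pt (fun v => Rmax 0 v) u.
Proof.
  intros u eps Heps. exists eps. split; auto. intros v [_ Hv]. simpl in *. unfold R_dist in *.
  unfold Rmax. repeat destruct Rle_dec; apply Rabs_def2 in Hv; apply Rabs_def1; lra.
Qed.

Lemma continuity_pt_tpow k u : continuity_pt (tpow k) u.
Proof.
  induction k. apply continuity_pt_const. intros x y. reflexivity.
  change (continuity_pt (fun v => Rmax 0 v * tpow k v) u).
  apply (continuity_pt_mult (fun v => Rmax 0 v) (tpow k)); auto. apply continuity_pt_Rmax0.
Qed.

Lemma derivable_pt_lim_reflect (phi : R -> R) t c s l :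
  derivable_pt_lim phi (t - s - c) l -> derivable_pt_lim (fun s => phi (t - s - c)) s (- l).
Proof.
  intros H eps Heps. destruct (H eps Heps) as [d K]. exists d. intros h Hh0 Hh.
  specialize (K (- h) ltac:(lra) ltac:(rewrite Rabs_Ropp; auto)).
  replace (t - (s + h) - c) with (t - s - c + - h) by ring.
  replace ((phi (t - s - c + - h) - phi (t - s - c)) / h - - l) with
    (- ((phi (t - s - c + - h) - phi (t - s - c)) / - h - l)) by (field; auto).
  rewrite Rabs_Ropp. auto.
Qed.

Lemma continuity_pt_reflect (phi : R -> R) t c s :
  continuity_pt phi (t - s - c) -> continuity_pt (fun s => phi (t - s - c)) s.
Proof.
  intros H eps Heps. destruct (H eps Heps) as [d [Hd K]]. exists d. split; auto.
  intros x [[_ Hne] Hx]. simpl in *. unfold R_dist in *. apply K. split. split. exact I.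
  intro E. apply Hne. lra.
  simpl. unfold R_dist. replace (t - x - c - (t - s - c)) with (- (x - s)) by ring. rewrite Rabs_Ropp. auto.
Qed.

Lemma continuity_pt_div_const (phi : R -> R) K s : continuity_pt phi s -> continuity_pt (fun u => phi u / K) s.
Proof.
  intros H. change (continuity_pt (fun u => phi u * / K) s).
  apply (continuity_pt_mult phi (fun _ => / K)); auto. apply continuity_pt_const. intros x y; auto.
Qed.

Lemma derivable_pt_lim_div_const (phi : R -> R) K s l :
  derivable_pt_lim phi s l -> derivable_pt_lim (fun u => phi u / K) s (l / K).
Proof.
  intros H. apply derivable_pt_lim_ext with (g := mult_real_fct (/ K) phi). intros v. unfold mult_real_fct, Rdiv. ring.
  replace (l / K) with (/ K * l) by (unfold Rdiv; ring). apply derivable_pt_lim_scal; auto.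
Qed.

(* The coefficient of [Om^(2m)] in [x2]; [kcoef_d] and [kcoef_dd] are its first two derivatives. *)
Definition kcoef (tau : R) (m : nat) (u : R) : R := tpow (2 * m + 1) (u - INR m * (2 * tau)) / INR (fact (2 * m + 1)).
Definition kcoef_d (tau : R) (m : nat) (u : R) : R := tpow (2 * m) (u - INR m * (2 * tau)) / INR (fact (2 * m)).

Lemma rderiv_on_of_derivable phi phi' D : (forall x, D x -> derivable_pt_lim phi x (phi' x)) -> rderiv_on phi phi' D.
Proof. intros H x Dx. apply rlim_of_derivable_pt_lim; auto. Qed.

Lemma rderiv_on_ext phi psi phi' psi' D :
  (forall s, D s -> phi s = psi s) -> (forall s, D s -> phi' s = psi' s) -> rderiv_on psi psi' D -> rderiv_on phi phi' D.
Proof.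
  intros E1 E2 H x Dx. rewrite E2; auto.
  apply rlim_local with (r2 := fun s => (psi s - psi x) / (s - x)) (D' := D) (r := 1). lra.
  intros s Ds _ _. split; auto. rewrite !E1; auto. apply H; auto.
Qed.

Lemma fact_ratio n x : INR (S n) * x / INR (fact (S n)) = x / INR (fact n).
Proof. rewrite fact_simpl, mult_INR. field. split. apply INR_fact_neq_0. apply not_0_INR. lia. Qed.

Lemma kcoef_reflect_cont tau m c0 x : continuity_pt (fun s => kcoef tau m (c0 - s)) x.
Proof.
  unfold kcoef. apply (continuity_pt_reflect (fun w => tpow (2 * m + 1) w / INR (fact (2 * m + 1)))).
  apply continuity_pt_div_const, continuity_pt_tpow.
Qed.

Lemma kcoef_vanish tau m u : u <= INR m * (2 * tau) -> kcoef tau m u = 0.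
Proof.
  intros Hu. unfold kcoef. replace (2 * m + 1)%nat with (S (2 * m)) by lia. rewrite tpow_nonpos. unfold Rdiv; ring. lra.
Qed.

Lemma kcoef_nonpos tau m u : tau > 0 -> u <= 0 -> kcoef tau m u = 0.
Proof.
  intros Ht Hu. apply kcoef_vanish. pose proof (pos_INR m). nra.
Qed.

Lemma kcoef_d_nonpos tau m u : tau > 0 -> (m >= 1)%nat -> u <= 0 -> kcoef_d tau m u = 0.
Proof.
  intros Ht Hm Hu. unfold kcoef_d. destruct m as [|m]; [lia|].
  replace (2 * S m)%nat with (S (S (2 * m))) by lia.
  rewrite tpow_nonpos; [unfold Rdiv; ring|]. pose proof (pos_INR (S m)). nra.
Qed.

Lemma kcoef_d_0 tau u : kcoef_d tau 0 u = 1.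
Proof. unfold kcoef_d. simpl. unfold tpow. simpl. field. Qed.

Definition kcoef_dd (tau : R) (m : nat) (u : R) : R :=
  match m with O => 0 | S m0 => kcoef tau m0 (u - 2 * tau) end.

Lemma rderiv_kcoef tau t m (D : R -> Prop) :
  (forall s, D s -> s <= t) ->
  rderiv_on (fun s => kcoef tau m (t - s)) (fun s => - kcoef_d tau m (t - s)) D.
Proof.
  intros HD. destruct m.
  - apply rderiv_on_ext with (psi := fun s => t - s - 0) (psi' := fun _ => - 1).
    + intros s Hs. unfold kcoef. simpl INR. rewrite tpow_pos by (pose proof (HD s Hs); lra).
      simpl. field.
    + intros s Hs. rewrite kcoef_d_0. reflexivity.
    + apply rderiv_on_of_derivable. intros x _.
      apply (derivable_pt_lim_reflect id t 0 x 1), derivable_pt_lim_id.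
  - apply rderiv_on_of_derivable. intros x _. unfold kcoef, kcoef_d.
    apply (derivable_pt_lim_reflect (fun w => tpow (2 * S m + 1) w / INR (fact (2 * S m + 1)))).
    replace (2 * S m + 1)%nat with (S (S (S (2 * m)))) by lia.
    replace (2 * S m)%nat with (S (S (2 * m))) by lia.
    rewrite <- fact_ratio. apply derivable_pt_lim_div_const, derivable_pt_lim_tpow.
Qed.

Lemma rderiv_kcoef_d tau t m D :
  rderiv_on (fun s => kcoef_d tau m (t - s)) (fun s => - kcoef_dd tau m (t - s)) D.
Proof.
  apply rderiv_on_of_derivable. intros x _. destruct m.
  - simpl kcoef_dd. rewrite Ropp_0. apply derivable_pt_lim_ext with (g := fun _ => 1).
    + intros; apply kcoef_d_0.
    + apply derivable_pt_lim_const.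
  - unfold kcoef_d, kcoef_dd, kcoef.
    apply (derivable_pt_lim_reflect (fun w => tpow (2 * S m) w / INR (fact (2 * S m)))).
    replace (2 * S m)%nat with (S (S (2 * m))) by lia.
    replace (2 * m + 1)%nat with (S (2 * m)) by lia.
    replace (t - x - 2 * tau - INR m * (2 * tau)) with (t - x - INR (S m) * (2 * tau)) by (rewrite S_INR; ring).
    rewrite <- fact_ratio. apply derivable_pt_lim_div_const, derivable_pt_lim_tpow.
Qed.

Definition kernel {X : Banach} (Om : X -> X) (tau : R) (M : nat) (u : R) (v : X) : X :=
  bsum M (fun m => bscal (kcoef tau m u) (opow Om (2 * m) v)).

Lemma kernel_add {X : Banach} (Om : X -> X) tau M u v w : blinear Om ->
  kernel Om tau M u (badd v w) = badd (kernel Om tau M u v) (kernel Om tau M u w).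
Proof.
  intros HL. unfold kernel. rewrite <- bsum_add. apply bsum_ext. intros k _.
  rewrite (proj1 (opow_linear Om (2 * k) HL)), bscal_distr_l. auto.
Qed.

Lemma kernel_op {X : Banach} (Om : X -> X) tau M u v : blinear Om ->
  kernel Om tau M u (Om v) = Om (kernel Om tau M u v).
Proof.
  intros HL. unfold kernel. rewrite (bsum_lin Om) by auto. apply bsum_ext. intros k _.
  rewrite (proj2 HL), opow_comm. auto.
Qed.

Lemma kernel_zero {X : Banach} (Om : X -> X) tau M u : blinear Om -> kernel Om tau M u bzero = bzero.
Proof.
  intros HL. unfold kernel. apply bsum_zero. intros k _. rewrite (blin_zero (opow Om (2 * k))).
  apply bscal_zero. apply opow_linear; auto.
Qed.

Lemma kernel_nonpos {X : Banach} (Om : X -> X) tau M u v : tau > 0 -> u <= 0 -> kernel Om tau M u v = bzero.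
Proof.
  intros Ht Hu. unfold kernel. apply bsum_zero. intros k _. rewrite kcoef_nonpos by auto. apply bscal_0.
Qed.

Lemma kernel_trunc {X : Banach} (Om : X -> X) tau M N u v : tau > 0 -> u <= INR N * (2 * tau) -> (N <= M)%nat ->
  kernel Om tau M u v = kernel Om tau N u v.
Proof.
  intros Ht Hu HNM. unfold kernel. apply bsum_widen_zero; auto. intros k Hk.
  rewrite kcoef_vanish. apply bscal_0. apply le_INR in Hk. nra.
Qed.

Definition exp_coef (tau : R) (j : nat) (u : R) : R := tpow j (u - (INR j - 1) * tau) / INR (fact j).

Lemma Int_part_bounds u tau : tau > 0 -> 0 <= u ->
  let k := Z.to_nat (Int_part (u / tau) + 1) in
  (INR k - 1) * tau <= u /\ u < INR k * tau.
Proof.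
  intros Ht Hu k. destruct (base_Int_part (u / tau)) as [H1 H2].
  set (z := Int_part (u / tau)) in *.
  assert (u / tau >= 0). { unfold Rdiv. apply Rle_ge, Rmult_le_pos; auto. left; apply Rinv_0_lt_compat; lra. }
  assert (Hz : (0 <= z)%Z). { assert (IZR z > -1) by lra. apply lt_IZR in H0. lia. }
  assert (Hk : INR k = IZR z + 1). { unfold k. rewrite INR_IZR_INZ, Z2Nat.id by lia. rewrite plus_IZR. auto. }
  rewrite Hk. replace (IZR z + 1 - 1) with (IZR z) by ring.
  assert (E : u / tau * tau = u) by (field; lra).
  split. rewrite <- E. apply Rmult_le_compat_r; lra.
  rewrite <- E. apply Rmult_lt_compat_r; lra.
Qed.

Lemma exp_tau_sum {X : Banach} tau (A : X -> X) J u v : tau > 0 -> - tau <= u ->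
  (forall j, (J <= j)%nat -> u - (INR j - 1) * tau < 0) ->
  exp_tau tau A u v = bsum J (fun j => bscal (exp_coef tau j u) (opow A j v)).
Proof.
  intros Ht Hu HJ.
  assert (Hvanish : forall j, u - (INR (S j) - 1) * tau <= 0 ->
            bscal (exp_coef tau (S j) u) (opow A (S j) v) = bzero).
  { intros j Hj. unfold exp_coef. rewrite tpow_nonpos by exact Hj. unfold Rdiv.
    rewrite Rmult_0_l. apply bscal_0. }
  assert (HJ0 : (0 < J)%nat) by (destruct J; [specialize (HJ O (le_n 0)); simpl in HJ; lra | lia]).
  unfold exp_tau. destruct (Rlt_dec u (- tau)) as [|_]; [lra|].
  destruct (Rlt_dec u 0) as [Hneg|Hpos].
  - destruct J as [|J]; [lia|].
    rewrite bsum_recl, bsum_zero, badd_0.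
    + unfold exp_coef, tpow. simpl. rewrite Rdiv_1_r, bscal_1. reflexivity.
    + intros k _. apply Hvanish. rewrite S_INR. pose proof (pos_INR k). nra.
  - cbv zeta. destruct (Int_part_bounds u tau Ht ltac:(lra)) as [K1 K2].
    set (k := Z.to_nat (Int_part (u / tau) + 1)) in *.
    transitivity (bsum (S k) (fun j => bscal (exp_coef tau j u) (opow A j v))).
    + apply bsum_ext. intros j Hj. unfold exp_coef. rewrite tpow_pos; [reflexivity|].
      assert (INR j <= INR k) by (apply le_INR; lia). nra.
    + apply bsum_eq_of_tails_zero; intros [|j] Hj; try lia.
      * apply Hvanish. assert (INR k <= INR j) by (apply le_INR; lia).
        assert (0 <= (INR j - INR k) * tau) by (apply Rmult_le_pos; lra). rewrite S_INR. lra.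
      * apply Hvanish. left. apply HJ, Hj.
Qed.

(* Even powers cancel in [exp_tau (u; Om) - exp_tau (u; -Om)], odd ones double, and
   [Om^-1 Om^(2m+1) = Om^(2m)]; the coefficient of the power [2m+1] of [exp_tau] is [kcoef m]. *)
Lemma x2_kernel {X : Banach} (Om Ominv : X -> X) tau M u v :
  blinear Om -> (forall y, Om (Ominv y) = y) -> (forall y, Ominv (Om y) = y) -> tau > 0 ->
  u <= INR M * (2 * tau) -> x2 tau Om Ominv u v = kernel Om tau M u v.
Proof.
  intros HL H1 H2 Ht Hu. pose proof (blinear_inverse Om Ominv HL H1 H2) as HLi.
  unfold x2. destruct (Rlt_dec u (- tau)) as [Hlt|Hge].
  - rewrite kernel_nonpos by lra. unfold exp_tau. destruct (Rlt_dec u (- tau)); [|lra].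
    destruct (Rlt_dec u (- tau)); [|lra]. rewrite bsub_diag, blin_zero by auto. apply bscal_zero.
  - rewrite <- (kernel_trunc Om tau (S M) M) by (auto; lra).
    assert (HJ : forall j, (2 * S M <= j)%nat -> u - (INR j - 1) * tau < 0).
    { intros j Hj. apply le_INR in Hj.
      replace (INR (2 * S M)) with (2 * INR M + 2) in Hj by (rewrite mult_INR, (S_INR M); simpl; ring).
      assert ((INR j - 1 - INR M * 2) * tau > 0) by (apply Rmult_lt_0_compat; lra). lra. }
    assert (Hu2 : - tau <= u) by (apply Rnot_lt_le; auto).
    rewrite (exp_tau_sum tau Om (2 * S M) u v), (exp_tau_sum tau (fun z => bopp (Om z)) (2 * S M) u v)
      by auto.
    rewrite <- bsum_sub, (bsum_lin Ominv) by auto. rewrite bsum_scal, bsum_pairs.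
    unfold kernel. apply bsum_ext. intros m _.
    rewrite !opow_neg by auto. rewrite !bscal_assoc. rewrite <- !bscal_sub_r.
    rewrite !(proj2 HLi). rewrite !bscal_assoc. rewrite pow_1_even, pow_1_odd.
    replace (1 / 2 * (exp_coef tau (2 * m) u - exp_coef tau (2 * m) u * 1)) with 0 by ring.
    rewrite bscal_0, badd_0l.
    change (opow Om (S (2 * m)) v) with (Om (opow Om (2 * m) v)). rewrite H2. f_equal.
    unfold exp_coef, kcoef. replace (S (2 * m)) with (2 * m + 1)%nat by lia.
    replace (INR (2 * m + 1) - 1) with (INR m * 2) by (rewrite plus_INR, mult_INR; simpl; ring).
    replace (INR m * 2 * tau) with (INR m * (2 * tau)) by ring. field.
    apply INR_fact_neq_0.
Qed.

(** * The representation formula *)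

Lemma cont_kernel_reflect {X : Banach} (Om : X -> X) tau N c (w : R -> X) D :
  blinear Om -> bbounded Om -> cont_on w D ->
  cont_on (fun r => kernel Om tau N (c - r) (w r)) D.
Proof.
  intros HL HB Cw. unfold kernel.
  apply (cont_bsum N (fun m r => bscal (kcoef tau m (c - r)) (opow Om (2 * m) (w r)))). intros m _.
  apply cont_scal.
  - intros x _. apply (rlim_of_continuity_pt (fun r => kcoef tau m (c - r))), kcoef_reflect_cont.
  - apply cont_op; [apply opow_linear | apply opow_bounded | ]; assumption.
Qed.

Lemma delay_difference_primitive {X : Banach} (q : R -> X) a b c :
  a <= b -> 0 <= c -> cont_on q (fun r => a - c <= r) ->
  (forall r, a - c <= r <= a -> q r = bzero) -> (forall r, b - c <= r <= b -> q r = bzero) ->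
  exists K, deriv_on K (fun s => a <= s <= b) (fun s => bsub (q s) (q (s - c))) /\ K b = K a.
Proof.
  intros Hab Hc Cq Ha Hb.
  destruct (primitive_exists q (a - c) Cq) as [Q [_ [DQ _]]].
  assert (Qconst : forall u v, a - c <= u <= v -> (forall r, u <= r <= v -> q r = bzero) -> Q v = Q u).
  { intros u v Huv Hz. apply (deriv_zero_const Q (fun r => u <= r <= v)); [lra | intros; lra |].
    apply (deriv_ext _ Q _ q); [auto | intros s Hs; symmetry; apply Hz, Hs |].
    eapply deriv_on_subset; [exact DQ | intros; lra]. }
  exists (fun s => bsub (Q s) (Q (s - c))). split.
  - apply deriv_sub.
    + eapply deriv_on_subset; [exact DQ | intros; lra].
    + apply (deriv_shift Q q (fun r => a - c <= r)); [exact DQ | intros; lra].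
  - rewrite (Qconst (b - c) b), (Qconst (a - c) a) by (auto; lra). rewrite !bsub_diag. reflexivity.
Qed.

Lemma deriv_at_0_of_vanishing {X : Banach} (y y1 : R -> X) tau : tau > 0 ->
  deriv_on y (fun t => - 2 * tau <= t) y1 -> (forall t, - 2 * tau <= t <= 0 -> y t = bzero) -> y1 0 = bzero.
Proof.
  intros Ht Dy Yz. symmetry. apply eq_of_bnorm_sub_small. intros eps Heps.
  destruct (Dy 0 ltac:(lra) eps Heps) as [d [Hd K]].
  set (s := - Rmin d (2 * tau) / 2).
  assert (Hs : - 2 * tau <= s < 0 /\ Rabs (s - 0) < d).
  { pose proof (Rmin_l d (2 * tau)). pose proof (Rmin_r d (2 * tau)). pose proof (Rmin_pos d (2 * tau) Hd ltac:(lra)).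
    unfold s. split. lra. rewrite Rminus_0_r, Rabs_left; lra. }
  specialize (K s ltac:(lra) ltac:(lra) (proj2 Hs)). rewrite !Yz in K by lra.
  rewrite bsub_diag, bscal_zero in K. auto.
Qed.

Section Representation.

Context {X : Banach}.
Variables (Om : X -> X) (tau : R) (f y y1 y2 : R -> X) (t : R) (N : nat).
Hypotheses (HL : blinear Om) (HB : bbounded Om) (Htau : tau > 0)
  (Hf : cont_on f (fun s => 0 <= s))
  (Dy : deriv_on y (fun s => - 2 * tau <= s) y1) (Dy1 : deriv_on y1 (fun s => 0 <= s) y2)
  (Hy2 : forall s, 0 <= s -> y2 s = badd (f s) (Om (Om (y (s - 2 * tau)))))
  (Hy0 : forall s, - 2 * tau <= s <= 0 -> y s = bzero)
  (Ht : 0 <= t) (HN : t <= INR N * (2 * tau)).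

(* [lagrange] and [delay_term] are the [Phi] and [q] of the header, with the sums cut at [N]. *)
Definition lagrange (s : R) : X :=
  bsum (S N) (fun m => opow Om (2 * m)
    (badd (bscal (kcoef tau m (t - s)) (y1 s)) (bscal (kcoef_d tau m (t - s)) (y s)))).

Definition lagrange_deriv (s : R) : X :=
  bsum (S N) (fun m => opow Om (2 * m)
    (bsub (bscal (kcoef tau m (t - s)) (y2 s)) (bscal (kcoef_dd tau m (t - s)) (y s)))).

Definition delay_term (s : R) : X := Om (Om (kernel Om tau N (t - 2 * tau - s) (y s))).

Lemma deriv_lagrange : deriv_on lagrange (fun s => 0 <= s <= t) lagrange_deriv.
Proof.
  apply deriv_bsum. intros m _. apply deriv_op; [apply opow_linear | apply opow_bounded | ]; auto.
  set (G := fun s => badd (bscal (kcoef tau m (t - s)) (y1 s)) (bscal (kcoef_d tau m (t - s)) (y s))).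
  apply (deriv_ext G G _
    (fun s => badd (badd (bscal (- kcoef_d tau m (t - s)) (y1 s)) (bscal (kcoef tau m (t - s)) (y2 s)))
                   (badd (bscal (- kcoef_dd tau m (t - s)) (y s)) (bscal (kcoef_d tau m (t - s)) (y1 s))))).
  - intros; reflexivity.
  - intros s _. symmetry. apply bscal_product_cancel.
  - apply deriv_add; apply deriv_scal.
    + apply rderiv_kcoef. intros; lra.
    + eapply deriv_on_subset; [exact Dy1 | intros; lra].
    + apply rderiv_kcoef_d.
    + eapply deriv_on_subset; [exact Dy | intros; lra].
Qed.

Lemma lagrange_deriv_eq s : 0 <= s <= t ->
  lagrange_deriv s = bsub (badd (kernel Om tau N (t - s) (f s)) (delay_term (s - 2 * tau))) (delay_term s).
Proof.
  intros Hs.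
  assert (E : lagrange_deriv s =
            bsub (kernel Om tau N (t - s) (y2 s)) (Om (Om (kernel Om tau N (t - s - 2 * tau) (y s))))).
  { unfold lagrange_deriv.
    rewrite (bsum_ext _ _ (fun m => bsub (bscal (kcoef tau m (t - s)) (opow Om (2 * m) (y2 s)))
                                         (opow Om (2 * m) (bscal (kcoef_dd tau m (t - s)) (y s))))).
    2: { intros m _. rewrite blin_sub, (proj2 (opow_linear Om _ HL)); auto. apply opow_linear, HL. }
    rewrite bsum_sub. f_equal.
    - rewrite <- (kernel_trunc Om tau (S N) N (t - s)) by (auto; lra). reflexivity.
    - rewrite bsum_recl. simpl kcoef_dd. rewrite bscal_0, opow_zero, badd_0l by exact HL.
      unfold kernel. rewrite !(bsum_lin Om) by exact HL. apply bsum_ext. intros m _.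
      rewrite (proj2 (opow_linear Om _ HL)). replace (2 * S m)%nat with (S (S (2 * m))) by lia.
      cbn [opow]. rewrite (proj2 HL), (proj2 HL). reflexivity. }
  rewrite E, Hy2 by lra. rewrite kernel_add, !kernel_op by exact HL. unfold delay_term.
  replace (t - 2 * tau - s) with (t - s - 2 * tau) by ring.
  replace (t - 2 * tau - (s - 2 * tau)) with (t - s) by ring.
  reflexivity.
Qed.

Lemma lagrange_at_t : lagrange t = y t.
Proof.
  unfold lagrange. rewrite Rminus_diag, bsum_recl, bsum_zero.
  - rewrite badd_0. cbn [opow]. rewrite kcoef_nonpos, kcoef_d_0, bscal_0, bscal_1, badd_0l by lra.
    reflexivity.
  - intros m _. rewrite kcoef_nonpos, kcoef_d_nonpos by (auto; lia || lra).
    rewrite !bscal_0, badd_0. apply opow_zero, HL.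
Qed.

Lemma lagrange_at_0 : lagrange 0 = bzero.
Proof.
  unfold lagrange. apply bsum_zero. intros m _.
  rewrite (deriv_at_0_of_vanishing y y1 tau), Hy0 by (auto; lra).
  rewrite !bscal_zero, badd_0. apply opow_zero, HL.
Qed.

Lemma is_RInt_kernel : is_RInt (fun s => kernel Om tau N (t - s) (f s)) 0 t (y t).
Proof.
  destruct (delay_difference_primitive delay_term 0 t (2 * tau)) as [K [DK HK]]; [lra | lra | | | |].
  - unfold delay_term. apply cont_op, cont_op, cont_kernel_reflect; auto.
    replace (0 - 2 * tau) with (- 2 * tau) by ring. eapply deriv_on_cont, Dy.
  - intros r Hr. unfold delay_term. rewrite Hy0 by lra.
    rewrite kernel_zero, !(blin_zero Om) by exact HL. reflexivity.
  - intros r Hr. unfold delay_term. rewrite kernel_nonpos by lra.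
    rewrite !(blin_zero Om) by exact HL. reflexivity.
  - replace (y t) with (bsub (badd (lagrange t) (K t)) (badd (lagrange 0) (K 0)))
      by (rewrite lagrange_at_t, lagrange_at_0, HK, badd_0l; apply badd_sub_cancel).
    apply (is_RInt_derive (fun s => badd (lagrange s) (K s))); [exact Ht | |].
    + apply (deriv_ext (fun s => badd (lagrange s) (K s)) (fun s => badd (lagrange s) (K s)) _
               (fun s => badd (lagrange_deriv s) (bsub (delay_term s) (delay_term (s - 2 * tau))))).
      * intros; reflexivity.
      * intros s Hs. rewrite lagrange_deriv_eq by exact Hs. symmetry. apply badd_sub_sub_cancel.
      * apply deriv_add; [exact deriv_lagrange | exact DK].
    + apply cont_kernel_reflect; auto. eapply cont_on_subset; [exact Hf | intros; lra].
Qed.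

End Representation.

Lemma solution_representation {X : Banach} (Om Ominv : X -> X) (tau : R) (f y : R -> X) :
  blinear Om -> bbounded Om ->
  (forall y, Om (Ominv y) = y) -> (forall y, Ominv (Om y) = y) ->
  tau > 0 -> cont_on f (fun t => 0 <= t) -> classical_solution tau Om f y ->
  forall t, 0 <= t -> is_RInt (fun s => x2 tau Om Ominv (t - s) (f s)) 0 t (y t).
Proof.
  intros HL HB H1 H2 Htau Hf [y1 [_ [y2 [Dy [_ [_ [_ [Dy1 [_ [Heq Hy0]]]]]]]]]] t Ht.
  assert (Hy2 : forall s, 0 <= s -> y2 s = badd (f s) (Om (Om (y (s - 2 * tau)))))
    by (intros s Hs; rewrite <- (Heq s Hs); symmetry; apply bsub_add_cancel).
  pose proof (nblocks_spec tau t Htau) as HN.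
  apply (is_RInt_ext _ (fun s => kernel Om tau (nblocks tau t) (t - s) (f s))).
  - intros s Hs. apply x2_kernel; auto. lra.
  - apply (is_RInt_kernel Om tau f y y1 y2); assumption.
Qed.

Theorem mainTheorem6 (X : Banach) (Om Ominv : X -> X) (tau : R) (f : R -> X) :
  blinear Om -> bbounded Om ->
  (forall y, Om (Ominv y) = y) -> (forall y, Ominv (Om y) = y) ->
  tau > 0 ->
  cont_on f (fun t => 0 <= t) ->
  (exists x : R -> X, classical_solution tau Om f x) /\
  (forall x : R -> X, classical_solution tau Om f x ->
     (forall t, - 2 * tau <= t <= 0 -> x t = bzero) /\
     (forall t, 0 <= t -> is_RInt (fun s => x2 tau Om Ominv (t - s) (f s)) 0 t (x t))).
Proof.
  intros HL HB H1 H2 Htau Hf. split.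
  - apply classical_solution_exists; auto.
  - intros x Hx. split.
    + destruct Hx as (_ & _ & _ & _ & _ & _ & _ & _ & _ & _ & Hx0). exact Hx0.
    + apply solution_representation; auto.
Qed.
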